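(* In the setting of the context, suppose that for a given $n\in\{0,1,\dots,T/\tau-1\}$ the MTI-FA iterates satisfy $|y^n|\le C_0+1$ and $|\dot y^n|\le (C_0+1)/\varepsilon^2$. Let $z_\pm^n(s)$, $r^n(s)$ be the solution of the system $$2i\dot z_\pm^n(s)+\alpha z_\pm^n(s)+g_\pm(|z_+^n(s)|^2,|z_-^n(s)|^2)z_\pm^n(s)=0,$$ $$\varepsilon^2\ddot r^n(s)+\Big(\alpha+\frac1{\varepsilon^2}\Big)r^n(s)+g_r(z_+^n(s),z_-^n(s),r^n(s);s)+\varepsilon^2u^n(s)=0,\qquad s>0,$$ with $u^n(s)=e^{is/\varepsilon^2}\ddot z_+^n(s)+e^{-is/\varepsilon^2}\overline{\ddot z_-^n(s)}$ and initial data $z_\pm^n(0)=z_\pm^{(0)}$, $r^n(0)=0$, $\dot r^n(0)=\dot r^{(0)}$. Then there exists a constant $\tau_2>0$, independent of $\varepsilon$ and $n$, such that for $0<\tau\le\tau_2$ and all $n=0,1,\dots,T/\tau-1$, $$\Big\|\frac{d^m}{dt^m}z_\pm^n\Big\|_{L^\infty(0,\tau)}\lesssim1,\ m=0,1,2,3;\qquad \varepsilon^{2l-2}\Big\|\frac{d^l}{dt^l}r^n\Big\|_{L^\infty(0,\tau)}\lesssim1,\ l=0,1,2.$$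
   Context: Setting. Let $0<\varepsilon\le1$, $\alpha\ge0$, $\lambda\in\mathbb{R}$, $p\in\mathbb{N}_0=\{0,1,2,\dots\}$, $g(\rho)=\lambda\rho^p$ and $f(y)=g(|y|^2)y$ for $y\in\mathbb{C}$. Let $\phi_1,\phi_2\in\mathbb{C}$ (independent of $\varepsilon$) and let $y(t)\in\mathbb{C}$ solve $\varepsilon^2\ddot y+(\alpha+\varepsilon^{-2})y+f(y)=0$ for $t>0$, $y(0)=\phi_1$, $\dot y(0)=\phi_2/\varepsilon^2$. Let $T^*$ be the maximal existence time, fix $0<T<T^*$, and assume $y\in C^2(0,T)$ with $\|\frac{d^m}{dt^m}y\|_{L^\infty(0,T)}\lesssim\varepsilon^{-2m}$ for $m=0,1,2$. Set $C_0=\max\{\|y\|_{L^\infty(0,T)},\varepsilon^2\|\dot y\|_{L^\infty(0,T)},\varepsilon^4\|\ddot y\|_{L^\infty(0,T)}\}$. $A\lesssim B$ means $|A|\le CB$ for a generic constant $C>0$ independent of $\tau$ (or $n$) and $\varepsilon$. $\tau>0$ is the time step, $t_n=n\tau$, $\bar z$ denotes complex conjugation, $\omega=\sqrt{1+\varepsilon^2\alpha}/\varepsilon^2$. Auxiliary functions: for $k=0,\dots,p$ let $\langle p_1,p_2,p_3\rangle_k$ be the set of $(p_1,p_2,p_3)\in\mathbb{N}_0^3$ with $p_1+2p_2+p_3=p-k$, $p_3\in\{0,1\}$; $g_\pm(\rho_+,\rho_-)=\sum_{\langle p_1,p_2,p_3\rangle_0}\lambda(\rho_++\rho_-)^{p_1}(\rho_+\rho_-)^{p_2}(\rho_\mp)^{p_3}$;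 for $k=1,\dots,p$, $g_k(z_+,z_-)=\lambda z_+^{k+1}z_-^{k}\sum_{\langle p_1,p_2,p_3\rangle_k}(|z_+|^2+|z_-|^2)^{p_1}|z_+|^{2p_2}|z_-|^{2p_2+2p_3}$. With $w=e^{is/\varepsilon^2}z_++e^{-is/\varepsilon^2}\overline{z_-}$, let $h(z_+,z_-,r;s)=g(|w+r|^2)(w+r)-g(|w|^2)w$ and $g_r(z_+,z_-,r;s)=\sum_{k=1}^p\big(g_k(z_+,z_-)e^{i(2k+1)s/\varepsilon^2}+\overline{g_k(z_-,z_+)}e^{-i(2k+1)s/\varepsilon^2}\big)+h(z_+,z_-,r;s)$ (empty sums if $p=0$). Also $P_k=\int_0^\tau\frac{\sin(\omega(\tau-\theta))}{\varepsilon^2\omega}e^{i(2k+1)\theta/\varepsilon^2}d\theta$, $Q_k=\int_0^\tau\frac{\sin(\omega(\tau-\theta))}{\varepsilon^2\omega}e^{i(2k+1)\theta/\varepsilon^2}\theta\,d\theta$, $\dot P_k=\int_0^\tau\frac{\cos(\omega(\tau-\theta))}{\varepsilon^2}e^{i(2k+1)\theta/\varepsilon^2}d\theta$, $\dot Q_k=\int_0^\tau\frac{\cos(\omega(\tau-\theta))}{\varepsilon^2}e^{i(2k+1)\theta/\varepsilon^2}\theta\,d\theta$. Scheme MTI-FA: $y^0=\phi_1$, $\dot y^0=\phi_2/\varepsilon^2$; given $(y^n,\dot y^n)$ let $z_+^{(0)}=\frac{y^n-i\varepsilon^2\dot y^n}{2}$, $z_-^{(0)}=\frac{\overline{y^n}-i\varepsilon^2\overline{\dot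 y^n}}{2}$, $\mu_\pm=\frac12g_\pm(|z_+^{(0)}|^2,|z_-^{(0)}|^2)+\frac\alpha2$, $\dot z_\pm^{(0)}=i\mu_\pm z_\pm^{(0)}$, $\dot r^{(0)}=-\dot z_+^{(0)}-\overline{\dot z_-^{(0)}}$, $u^{(0)}=-\mu_+^2z_+^{(0)}-\mu_-^2\overline{z_-^{(0)}}$, $g_{k,\pm}^{(0)}=g_k(z_\pm^{(0)},z_\mp^{(0)})$, $\dot g_{k,\pm}^{(0)}=\frac{d}{ds}g_k(Z_\pm(s),Z_\mp(s))|_{s=0}$ with $Z_\pm(s)=e^{i\mu_\pm s}z_\pm^{(0)}$; $z_\pm^{n+1}=e^{i\mu_\pm\tau}z_\pm^{(0)}$, $\dot z_\pm^{n+1}=i\mu_\pm z_\pm^{n+1}$, $\ddot z_\pm^{n+1}=-\mu_\pm^2z_\pm^{n+1}$, $r^{n+1}=\frac{\sin(\omega\tau)}{\omega}(\dot r^{(0)}-\frac\tau2u^{(0)})-\sum_{k=1}^p[P_kg_{k,+}^{(0)}+Q_k\dot g_{k,+}^{(0)}+\overline{P_kg_{k,-}^{(0)}}+\overline{Q_k\dot g_{k,-}^{(0)}}]$, $y^{n+1}=e^{i\tau/\varepsilon^2}z_+^{n+1}+e^{-i\tau/\varepsilon^2}\overline{z_-^{n+1}}+r^{n+1}$, $u^{n+1}=e^{i\tau/\varepsilon^2}\ddot z_+^{n+1}+e^{-i\tau/\varepsilon^2}\overline{\ddot z_-^{n+1}}$, $h^{n+1}=g(|y^{n+1}|^2)y^{n+1}-g(|y^{n+1}-r^{n+1}|^2)(y^{n+1}-r^{n+1})$,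 $\dot r^{n+1}=-\sum_{k=1}^p[\dot P_kg_{k,+}^{(0)}+\dot Q_k\dot g_{k,+}^{(0)}+\overline{\dot P_kg_{k,-}^{(0)}}+\overline{\dot Q_k\dot g_{k,-}^{(0)}}]+\cos(\omega\tau)(\dot r^{(0)}-\frac\tau2u^{(0)})-\frac\tau2(\frac{h^{n+1}}{\varepsilon^2}+u^{n+1})$, $\dot y^{n+1}=e^{i\tau/\varepsilon^2}(\dot z_+^{n+1}+\frac{i}{\varepsilon^2}z_+^{n+1})+e^{-i\tau/\varepsilon^2}(\overline{\dot z_-^{n+1}}-\frac{i}{\varepsilon^2}\overline{z_-^{n+1}})+\dot r^{n+1}$. Here $z_\pm^{(0)},\dot r^{(0)}$ refer to the quantities built from the given $(y^n,\dot y^n)$. *)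

From Stdlib Require Import Reals.
From Coquelicot Require Import Coquelicot.
Open Scope R_scope.

Definition gfun (lambda : R) (p : nat) (rho : R) : R := lambda * rho ^ p.

Definition ffun (lambda : R) (p : nat) (y : C) : C :=
  (RtoC (gfun lambda p (Cmod y ^ 2)) * y)%C.

Definition cis (theta : R) : C := (cos theta, sin theta).

Fixpoint rsum (n : nat) (F : nat -> R) : R :=
  match n with O => 0 | S m => rsum m F + F m end.

Fixpoint csum1 (n : nat) (F : nat -> C) : C :=
  match n with O => RtoC 0 | S m => (csum1 m F + F (S m))%C end.

(* Sum of F p1 p2 p3 over the index set <p1,p2,p3> with p1 + 2 p2 + p3 = q,
   p3 in {0,1}; for <p1,p2,p3>_k take q = p - k. *)
Definition tri_sum (q : nat) (F : nat -> nat -> nat -> R) : R :=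
  rsum (S q) (fun p2 => rsum 2 (fun p3 =>
    if Nat.leb (2 * p2 + p3) q then F (q - 2 * p2 - p3)%nat p2 p3 else 0)).

Definition g_plus (lambda : R) (p : nat) (rp rm : R) : R :=
  tri_sum p (fun p1 p2 p3 => lambda * (rp + rm) ^ p1 * (rp * rm) ^ p2 * rm ^ p3).
Definition g_minus (lambda : R) (p : nat) (rp rm : R) : R :=
  tri_sum p (fun p1 p2 p3 => lambda * (rp + rm) ^ p1 * (rp * rm) ^ p2 * rp ^ p3).

Definition g_k_sum (lambda : R) (p k : nat) (zp zm : C) : R :=
  tri_sum (p - k) (fun p1 p2 p3 =>
      (Cmod zp ^ 2 + Cmod zm ^ 2) ^ p1 * Cmod zp ^ (2 * p2)
      * Cmod zm ^ (2 * p2 + 2 * p3)).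
Definition g_k (lambda : R) (p k : nat) (zp zm : C) : C :=
  (RtoC lambda * Cpow zp (S k) * Cpow zm k * RtoC (g_k_sum lambda p k zp zm))%C.

Definition wfun (eps : R) (zp zm : C) (s : R) : C :=
  (cis (s / eps ^ 2) * zp + cis (- (s / eps ^ 2)) * Cconj zm)%C.

Definition hfun (lambda : R) (p : nat) (eps : R) (zp zm r : C) (s : R) : C :=
  (ffun lambda p (wfun eps zp zm s + r) - ffun lambda p (wfun eps zp zm s))%C.

Definition g_r (lambda : R) (p : nat) (eps : R) (zp zm r : C) (s : R) : C :=
  (csum1 p (fun k =>
      g_k lambda p k zp zm * cis (INR (2 * k + 1) * s / eps ^ 2)
      + Cconj (g_k lambda p k zm zp) * cis (- (INR (2 * k + 1) * s / eps ^ 2)))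
   + hfun lambda p eps zp zm r s)%C.

Definition z_plus0 (eps : R) (yn ydn : C) : C :=
  (RtoC (/ 2) * (yn - Ci * RtoC (eps ^ 2) * ydn))%C.
Definition z_minus0 (eps : R) (yn ydn : C) : C :=
  (RtoC (/ 2) * (Cconj yn - Ci * RtoC (eps ^ 2) * Cconj ydn))%C.
Definition mu_plus (alpha lambda : R) (p : nat) (eps : R) (yn ydn : C) : R :=
  / 2 * g_plus lambda p (Cmod (z_plus0 eps yn ydn) ^ 2) (Cmod (z_minus0 eps yn ydn) ^ 2)
  + alpha / 2.
Definition mu_minus (alpha lambda : R) (p : nat) (eps : R) (yn ydn : C) : R :=
  / 2 * g_minus lambda p (Cmod (z_plus0 eps yn ydn) ^ 2) (Cmod (z_minus0 eps yn ydn) ^ 2)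
  + alpha / 2.
(* dz_pm^(0) = i mu_pm z_pm^(0);  dr^(0) = - dz_+^(0) - conj(dz_-^(0)) *)
Definition rdot0 (alpha lambda : R) (p : nat) (eps : R) (yn ydn : C) : C :=
  (- (Ci * RtoC (mu_plus alpha lambda p eps yn ydn) * z_plus0 eps yn ydn)
   - Cconj (Ci * RtoC (mu_minus alpha lambda p eps yn ydn) * z_minus0 eps yn ydn))%C.

Definition is_solution (alpha lambda : R) (p : nat) (eps tau : R) (yn ydn : C)
  (zp zp1 zp2 zp3 zm zm1 zm2 zm3 r r1 r2 : R -> C) : Prop :=
  (forall s, 0 <= s <= tau ->
     is_derive zp s (zp1 s) /\ is_derive zp1 s (zp2 s) /\ is_derive zp2 s (zp3 s) /\
     is_derive zm s (zm1 s) /\ is_derive zm1 s (zm2 s) /\ is_derive zm2 s (zm3 s) /\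
     is_derive r s (r1 s) /\ is_derive r1 s (r2 s) /\
     (2 * Ci * zp1 s + RtoC alpha * zp s
        + RtoC (g_plus lambda p (Cmod (zp s) ^ 2) (Cmod (zm s) ^ 2)) * zp s = 0)%C /\
     (2 * Ci * zm1 s + RtoC alpha * zm s
        + RtoC (g_minus lambda p (Cmod (zp s) ^ 2) (Cmod (zm s) ^ 2)) * zm s = 0)%C /\
     (RtoC (eps ^ 2) * r2 s + RtoC (alpha + / eps ^ 2) * r s
        + g_r lambda p eps (zp s) (zm s) (r s) s
        + RtoC (eps ^ 2) * (cis (s / eps ^ 2) * zp2 s
                            + cis (- (s / eps ^ 2)) * Cconj (zm2 s)) = 0)%C) /\
  zp 0 = z_plus0 eps yn ydn /\ zm 0 = z_minus0 eps yn ydn /\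
  r 0 = RtoC 0 /\ r1 0 = rdot0 alpha lambda p eps yn ydn.

(* The equations for z_+ and z_- only rotate phases: |z_pm| is conserved, so g_pm is frozen at its
   initial value, z_pm(s) = e^{i mu_pm s} z_pm(0), and every derivative of z_pm is bounded by a
   power of |mu_pm| times |z_pm(0)|.  The oscillatory part of g_r is a finite sum of modes
   e^{i nu s} with eps^2 nu close to +-(2k+1), k >= 1, hence non-resonant with the oscillator
   frequency omega ~ 1/eps^2; solving mode by mode gives a corrector P = O(eps^2), P' = O(1)
   that absorbs it.  The remainder q = r - P then solves q'' + omega^2 q = O(1) + O(|r|/eps^2),
   and since h is Lipschitz in r, a Gronwall estimate for |q'|^2 + omega^2 |q|^2 on a short time
   interval, closed by a continuity argument on |r|, gives |r| = O(eps^2) and |r'| = O(1);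
   eps^2 |r''| = O(1) is then read off the equation. *)

From Stdlib Require Import Reals Lra Lia Psatz Classical_Prop.
From Coquelicot Require Import Coquelicot.
Open Scope R_scope.

(** * Real calculus on an interval *)

Lemma is_derive_Rmult (f g : R -> R) t a b :
  is_derive f t a -> is_derive g t b ->
  is_derive (fun x => f x * g x) t (a * g t + f t * b).
Proof. intros Ha Hb. apply (is_derive_mult f g t a b Ha Hb). intros; apply Rmult_comm. Qed.

Lemma is_derive_Rplus (f g : R -> R) t a b :
  is_derive f t a -> is_derive g t b -> is_derive (fun x => f x + g x) t (a + b).
Proof. intros Ha Hb. exact (is_derive_plus f g t a b Ha Hb). Qed.

Lemma is_derive_Rminus (f g : R -> R) t a b :
  is_derive f t a -> is_derive g t b -> is_derive (fun x => f x - g x) t (a - b).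
Proof. intros Ha Hb. exact (is_derive_minus f g t a b Ha Hb). Qed.

Lemma is_derive_ext_eq (f g : R -> R) (t a b : R) :
  (forall x, f x = g x) -> a = b -> is_derive f t a -> is_derive g t b.
Proof. intros Hfg <-. apply is_derive_ext. exact Hfg. Qed.

Lemma is_derive_cos_scal nu t : is_derive (fun s => cos (nu * s)) t (- nu * sin (nu * t)).
Proof. auto_derive; [easy | ring]. Qed.

Lemma is_derive_sin_scal nu t : is_derive (fun s => sin (nu * s)) t (nu * cos (nu * t)).
Proof. auto_derive; [easy | ring]. Qed.

Lemma is_derive_continuity_pt (f : R -> R) t l : is_derive f t l -> continuity_pt f t.
Proof.
intros H. apply is_derive_Reals in H.
apply derivable_continuous_pt. exists l. exact H.
Qed.

Lemma exp_le_exp_of_le x y : x <= y -> exp x <= exp y.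
Proof. intros [H | ->]; [left; apply exp_increasing; exact H | apply Rle_refl]. Qed.

Lemma le_0_of_derive_nonpos (phi dphi : R -> R) (T : R) :
  (forall t, 0 <= t <= T -> is_derive phi t (dphi t) /\ dphi t <= 0) ->
  forall t, 0 <= t <= T -> phi t <= phi 0.
Proof.
intros H t Ht.
destruct (MVT_gen phi 0 t dphi) as [c [Hc Heq]].
- intros x Hx. rewrite Rmin_left, Rmax_right in Hx by lra. apply H; lra.
- intros x Hx. rewrite Rmin_left, Rmax_right in Hx by lra.
  apply (is_derive_continuity_pt _ _ (dphi x)). apply H; lra.
- rewrite Rmin_left, Rmax_right in Hc by lra.
  assert (dphi c <= 0) by (apply H; lra).
  assert (dphi c * (t - 0) <= 0) by (apply Rmult_le_0_r; lra).
  lra.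
Qed.

Lemma eq_0_of_derive_0 (f : R -> R) (T : R) :
  (forall t, 0 <= t <= T -> is_derive f t 0) -> forall t, 0 <= t <= T -> f t = f 0.
Proof.
intros Hf t Ht.
assert (f t <= f 0).
{ apply (le_0_of_derive_nonpos f (fun _ => 0) T); [|exact Ht].
  intros s Hs. split; [apply Hf; exact Hs | lra]. }
assert (- f t <= - f 0).
{ apply (le_0_of_derive_nonpos (fun s => - f s) (fun _ => 0) T); [|exact Ht].
  intros s Hs. split; [|lra].
  apply (is_derive_ext_eq (fun s => 0 - f s) _ s (0 - 0)); [intros; ring | ring |].
  apply is_derive_Rminus; [exact (is_derive_const 0 s) | apply Hf; exact Hs]. }
lra.
Qed.

(* One-sided difference quotients suffice at the endpoints of [0, T]. *)
Lemma is_derive_unique_on (f g : R -> R) t l l' T :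
  is_derive f t l -> is_derive g t l' -> 0 < T -> 0 <= t <= T ->
  (forall x, 0 <= x <= T -> f x = g x) -> l = l'.
Proof.
intros Hf Hg HT Ht Heq.
assert (Hd := is_derive_Rminus f g t l l' Hf Hg). apply is_derive_Reals in Hd.
destruct (Req_dec (l - l') 0) as [E | E]; [lra | exfalso].
destruct (Hd (Rabs (l - l'))) as [d Hdel]; [apply Rabs_pos_lt; exact E |].
assert (Hd0 := cond_pos d).
assert (Hh : exists h, h <> 0 /\ Rabs h < d /\ 0 <= t + h <= T).
{ destruct (Rlt_le_dec t T) as [HtT | HtT].
  - exists (Rmin (d / 2) (T - t)).
    assert (0 < Rmin (d / 2) (T - t)) by (apply Rmin_glb_lt; lra).
    pose proof (Rmin_l (d / 2) (T - t)). pose proof (Rmin_r (d / 2) (T - t)).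
    rewrite Rabs_right by lra. repeat split; lra.
  - exists (- Rmin (d / 2) T).
    assert (0 < Rmin (d / 2) T) by (apply Rmin_glb_lt; lra).
    pose proof (Rmin_l (d / 2) T). pose proof (Rmin_r (d / 2) T).
    rewrite Rabs_Ropp, Rabs_right by lra. repeat split; lra. }
destruct Hh as [h [Hh0 [Hhd Hth]]].
specialize (Hdel h Hh0 Hhd).
rewrite (Heq (t + h)), (Heq t) in Hdel by lra.
replace ((g (t + h) - g (t + h) - (g t - g t)) / h - (l - l')) with (- (l - l')) in Hdel
  by (field; exact Hh0).
rewrite Rabs_Ropp in Hdel. lra.
Qed.

Lemma continuity_pt_le_left (F : R -> R) m B :
  0 < m -> continuity_pt F m -> (forall t, 0 <= t < m -> F t <= B) -> F m <= B.
Proof.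
intros Hm Hc H.
destruct (Rle_dec (F m) B) as [| Hn]; [assumption | exfalso].
apply Rnot_le_lt in Hn.
destruct (Hc (F m - B)) as [d [Hd Hdd]]; [lra |].
set (t := Rmax 0 (m - d / 2)).
assert (Ht0 : 0 <= t) by apply Rmax_l.
assert (Ht1 : m - d / 2 <= t) by apply Rmax_r.
assert (Htm : t < m) by (unfold t; apply Rmax_lub_lt; lra).
specialize (Hdd t). simpl in Hdd. unfold R_dist, D_x, no_cond in Hdd.
assert (Hlt : Rabs (F t - F m) < F m - B).
{ apply Hdd. split; [split; [exact I | lra] |]. rewrite Rabs_left by lra. lra. }
specialize (H t (conj Ht0 Htm)).
rewrite Rabs_left1 in Hlt; lra.
Qed.

Lemma continuity_argument (F : R -> R) T B B' :
  0 <= T -> B' < B -> (forall t, 0 <= t <= T -> continuity_pt F t) -> F 0 <= B' ->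
  (forall s, 0 <= s <= T -> (forall t, 0 <= t <= s -> F t <= B) -> F s <= B') ->
  forall s, 0 <= s <= T -> F s <= B'.
Proof.
intros HT HB Hc H0 Hstep.
set (A := fun x => 0 <= x <= T /\ forall t, 0 <= t <= x -> F t <= B).
assert (HA0 : A 0).
{ split; [lra |]. intros t Ht. replace t with 0 by lra. lra. }
destruct (completeness A) as [m [Hub Hlub]].
{ exists T. intros x [Hx _]. lra. }
{ exists 0. exact HA0. }
assert (Hm0 : 0 <= m) by (apply Hub; exact HA0).
assert (HmT : m <= T) by (apply Hlub; intros x [Hx _]; lra).
assert (Hbelow : forall t, 0 <= t < m -> F t <= B).
{ intros t Ht.
  assert (exists x, A x /\ t < x) as [x [[_ Hx] Htx]].
  { apply NNPP. intros Hno.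
    assert (m <= t); [| lra].
    apply Hlub. intros x Ax. apply Rnot_lt_le. intros Hlt. apply Hno. exists x. auto. }
  apply Hx. lra. }
assert (Hall : forall t, 0 <= t <= m -> F t <= B).
{ intros t Ht. destruct (Req_dec t m) as [-> | E]; [| apply Hbelow; lra].
  destruct (Req_dec m 0) as [-> | E]; [lra |].
  apply continuity_pt_le_left; [lra | apply Hc; lra | exact Hbelow]. }
assert (Hall' : forall s, 0 <= s <= m -> F s <= B').
{ intros s Hs. apply Hstep; [lra |]. intros t Ht. apply Hall. lra. }
destruct (Req_dec m T) as [E | E]; [intros s Hs; apply Hall'; lra | exfalso].
assert (HFm : F m <= B') by (apply Hall'; lra).
destruct (Hc m (conj Hm0 HmT) (B - F m)) as [d [Hd Hdd]]; [lra |].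
set (x := Rmin T (m + d / 2)).
assert (Hx1 : x <= T) by apply Rmin_l.
assert (Hx2 : x <= m + d / 2) by apply Rmin_r.
assert (Hx3 : m < x) by (unfold x; apply Rmin_glb_lt; lra).
assert (A x).
{ split; [lra |]. intros t Ht.
  destruct (Rle_dec t m) as [Htm | Htm]; [apply Hall; lra |].
  specialize (Hdd t). simpl in Hdd. unfold R_dist, D_x, no_cond in Hdd.
  assert (Hlt : Rabs (F t - F m) < B - F m).
  { apply Hdd. split; [split; [exact I | lra] |]. rewrite Rabs_right by lra. lra. }
  apply Rabs_def2 in Hlt. lra. }
assert (x <= m) by (apply Hub; assumption). lra.
Qed.

(** * Complex-valued functions of a real variable *)

Ltac unfold_C := unfold Re, Im, Cplus, Cmult, Cminus, Copp, RtoC, Ci, Cconj, cis in *; simpl in *.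

Lemma C_ext (a b : C) : Re a = Re b -> Im a = Im b -> a = b.
Proof. destruct a, b; simpl; intros; subst; reflexivity. Qed.

Lemma is_derive_C_of_Re_Im (f : R -> C) t a b :
  is_derive (fun s => Re (f s)) t a -> is_derive (fun s => Im (f s)) t b ->
  is_derive f t (a, b).
Proof.
intros Ha Hb.
apply (is_derive_ext (fun s => (Re (f s), Im (f s)) : C)).
{ intros s. destruct (f s); reflexivity. }
unfold is_derive in *.
eapply filterdiff_ext_lin.
- apply (filterdiff_comp'_2 (fun s => Re (f s)) (fun s => Im (f s)) (fun x y => (x, y) : C) t
    (fun y => scal y a) (fun y => scal y b) (fun x y => (x, y) : C) Ha Hb).
  apply filterdiff_linear. split.
  + intros [x1 x2] [y1 y2]; reflexivity.
  + intros k [x1 x2]; reflexivity.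
  + exists 1. split; [lra |]. intros [x1 x2]. rewrite Rmult_1_l. apply Rle_refl.
- intros y. reflexivity.
Qed.

Lemma is_derive_Re (q : R -> C) s d : is_derive q s d -> is_derive (fun t => Re (q t)) s (Re d).
Proof.
intros H. unfold is_derive in *.
apply (filterdiff_comp q (fun c : C => fst c) (fun y => scal y d) (fun c : C => fst c) H).
apply filterdiff_linear. apply is_linear_fst.
Qed.

Lemma is_derive_Im (q : R -> C) s d : is_derive q s d -> is_derive (fun t => Im (q t)) s (Im d).
Proof.
intros H. unfold is_derive in *.
apply (filterdiff_comp q (fun c : C => snd c) (fun y => scal y d) (fun c : C => snd c) H).
apply filterdiff_linear. apply is_linear_snd.
Qed.

Lemma is_derive_C_unique_on (f g : R -> C) t l l' T :
  is_derive f t l -> is_derive g t l' -> 0 < T -> 0 <= t <= T ->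
  (forall x, 0 <= x <= T -> f x = g x) -> l = l'.
Proof.
intros Hf Hg HT Ht Heq. apply C_ext.
- apply (is_derive_unique_on _ _ t _ _ T (is_derive_Re _ _ _ Hf) (is_derive_Re _ _ _ Hg) HT Ht).
  intros x Hx. rewrite Heq; auto.
- apply (is_derive_unique_on _ _ t _ _ T (is_derive_Im _ _ _ Hf) (is_derive_Im _ _ _ Hg) HT Ht).
  intros x Hx. rewrite Heq; auto.
Qed.

Lemma is_derive_Cmod2 (q : R -> C) t d :
  is_derive q t d ->
  is_derive (fun s => Cmod (q s) ^ 2) t (2 * (Re (q t) * Re d + Im (q t) * Im d)).
Proof.
intros H.
pose proof (is_derive_Re _ _ _ H) as HRe. pose proof (is_derive_Im _ _ _ H) as HIm.
apply (is_derive_ext_eq (fun s => Re (q s) * Re (q s) + Im (q s) * Im (q s)) _ t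
         (Re d * Re (q t) + Re (q t) * Re d + (Im d * Im (q t) + Im (q t) * Im d))).
- intros s. rewrite Cmod2_alt. ring.
- ring.
- apply is_derive_Rplus; apply is_derive_Rmult; assumption.
Qed.

Lemma continuity_pt_Cmod (r : R -> C) t d : is_derive r t d -> continuity_pt (fun x => Cmod (r x)) t.
Proof.
intros H.
pose proof (is_derive_continuity_pt _ _ _ (is_derive_Re _ _ _ H)) as C1.
pose proof (is_derive_continuity_pt _ _ _ (is_derive_Im _ _ _ H)) as C2.
unfold Cmod.
apply (continuity_pt_comp (fun x => Re (r x) ^ 2 + Im (r x) ^ 2) sqrt).
- apply continuity_pt_plus; apply continuity_pt_mult; auto;
    try apply continuity_pt_mult; auto; apply continuity_pt_const; intros ? ?; reflexivity.
- apply continuity_pt_sqrt. pose proof (pow2_ge_0 (Re (r t))). pose proof (pow2_ge_0 (Im (r t))). lra.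
Qed.

Lemma Cmod_sub_le (a b : C) : Cmod (a - b) <= Cmod a + Cmod b.
Proof. unfold Cminus. eapply Rle_trans; [apply Cmod_triangle |]. rewrite Cmod_opp. lra. Qed.

Lemma Cmod_RtoC_mult (x : R) (z : C) : Cmod (RtoC x * z) = Rabs x * Cmod z.
Proof. rewrite Cmod_mult, Cmod_R. reflexivity. Qed.

Lemma Rabs_Cmod_sub_le (a b : C) : Rabs (Cmod a - Cmod b) <= Cmod (a - b).
Proof.
assert (Cmod a <= Cmod (a - b) + Cmod b).
{ replace a with ((a - b) + b)%C at 1 by ring. apply Cmod_triangle. }
assert (Cmod b <= Cmod (a - b) + Cmod a).
{ replace b with (- (a - b) + a)%C at 1 by ring.
  eapply Rle_trans; [apply Cmod_triangle |]. rewrite Cmod_opp. lra. }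
apply Rabs_le. lra.
Qed.

Lemma Cmod_cis a : Cmod (cis a) = 1.
Proof.
unfold Cmod, cis; simpl. pose proof (sin2_cos2 a) as H. unfold Rsqr in H.
replace (cos a * (cos a * 1) + sin a * (sin a * 1)) with 1 by lra. apply sqrt_1.
Qed.

Lemma Cmod_cis_mult a x : Cmod (cis a * x) = Cmod x.
Proof. rewrite Cmod_mult, Cmod_cis. ring. Qed.

Lemma cis_add a b : (cis a * cis b)%C = cis (a + b).
Proof. apply C_ext; unfold_C; [rewrite cos_plus | rewrite sin_plus]; ring. Qed.

Lemma cis_conj a : Cconj (cis a) = cis (- a).
Proof. apply C_ext; unfold_C; [rewrite cos_neg | rewrite sin_neg]; ring. Qed.

Lemma cis_0 : cis 0 = RtoC 1.
Proof. apply C_ext; unfold_C; [rewrite cos_0 | rewrite sin_0]; ring. Qed.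

Lemma Cpow_cis_mult a x n : Cpow (cis a * x) n = (cis (INR n * a) * Cpow x n)%C.
Proof.
induction n as [| n IHn].
- simpl. rewrite Rmult_0_l, cis_0. ring.
- rewrite Cpow_S, IHn, Cpow_S, S_INR.
  replace ((INR n + 1) * a) with (a + INR n * a) by ring. rewrite <- cis_add. ring.
Qed.

Lemma is_derive_cis_mult (a : C) (nu t : R) :
  is_derive (fun s => (a * cis (nu * s))%C) t (Ci * RtoC nu * a * cis (nu * t))%C.
Proof.
pose proof (is_derive_cos_scal nu t) as Hc. pose proof (is_derive_sin_scal nu t) as Hs.
apply is_derive_C_of_Re_Im.
- eapply is_derive_ext_eq;
    [| | apply (is_derive_Rminus _ _ _ _ _ (is_derive_scal _ _ (Re a) _ Hc) (is_derive_scal _ _ (Im a) _ Hs))].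
  + intros x; unfold_C; ring.
  + unfold_C; ring.
- eapply is_derive_ext_eq;
    [| | apply (is_derive_Rplus _ _ _ _ _ (is_derive_scal _ _ (Re a) _ Hs) (is_derive_scal _ _ (Im a) _ Hc))].
  + intros x; unfold_C; ring.
  + unfold_C; ring.
Qed.

(** * Energy estimate for a forced harmonic oscillator *)

Lemma Re_Im_dot_le_Cmod (a b : C) : Re a * Re b + Im a * Im b <= Cmod a * Cmod b.
Proof.
unfold Cmod. rewrite <- sqrt_mult by nra.
destruct (Rle_dec (Re a * Re b + Im a * Im b) 0).
{ pose proof (sqrt_pos ((Re a ^ 2 + Im a ^ 2) * (Re b ^ 2 + Im b ^ 2))). unfold Re, Im in *. lra. }
rewrite <- (sqrt_pow2 (Re a * Re b + Im a * Im b)) by lra.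
apply sqrt_le_1_alt. pose proof (pow2_ge_0 (Re a * Im b - Im a * Re b)). unfold Re, Im in *. nra.
Qed.

Definition osc_energy (om2 : R) (q q1 : R -> C) (t : R) : R :=
  Cmod (q1 t) ^ 2 + om2 * Cmod (q t) ^ 2.

Lemma osc_energy_ge0 om2 q q1 t : 0 <= om2 -> 0 <= osc_energy om2 q q1 t.
Proof.
intros H. unfold osc_energy.
pose proof (pow2_ge_0 (Cmod (q1 t))). pose proof (pow2_ge_0 (Cmod (q t))). nra.
Qed.

Lemma Cmod_le_sqrt_osc_energy om2 q q1 t : 0 <= om2 -> Cmod (q1 t) <= sqrt (osc_energy om2 q q1 t).
Proof.
intros H. rewrite <- (sqrt_pow2 (Cmod (q1 t))) by apply Cmod_ge_0.
apply sqrt_le_1_alt. unfold osc_energy. pose proof (pow2_ge_0 (Cmod (q t))). nra.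
Qed.

Lemma Cmod_le_scaled_sqrt_osc_energy om2 e q q1 t :
  0 < e -> / e ^ 2 <= om2 -> Cmod (q t) <= e * sqrt (osc_energy om2 q q1 t).
Proof.
intros He Hom.
assert (Hom0 : 0 < / e ^ 2) by (apply Rinv_0_lt_compat, pow_lt; exact He).
rewrite <- (sqrt_pow2 e) by lra. rewrite <- sqrt_mult by (try apply osc_energy_ge0; nra).
rewrite <- (sqrt_pow2 (Cmod (q t))) by apply Cmod_ge_0.
apply sqrt_le_1_alt. unfold osc_energy.
pose proof (pow2_ge_0 (Cmod (q1 t))). pose proof (pow2_ge_0 (Cmod (q t))).
assert (/ e ^ 2 * Cmod (q t) ^ 2 <= om2 * Cmod (q t) ^ 2) by (apply Rmult_le_compat_r; lra).
replace (Cmod (q t) ^ 2) with (e ^ 2 * (/ e ^ 2 * Cmod (q t) ^ 2)) at 1 by (field; lra).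
assert (0 < e ^ 2) by (apply pow_lt; exact He).
apply Rmult_le_compat_l; lra.
Qed.

Lemma osc_energy_derive_le (q q1 q2 : R -> C) om2 c L t :
  0 <= om2 -> 0 <= L ->
  Cmod (q2 t + RtoC om2 * q t)%C <= c + L * sqrt (osc_energy om2 q q1 t) ->
  2 * (Re (q1 t) * Re (q2 t) + Im (q1 t) * Im (q2 t))
    + om2 * (2 * (Re (q t) * Re (q1 t) + Im (q t) * Im (q1 t)))
  <= (2 * L + 1) * osc_energy om2 q q1 t + c ^ 2.
Proof.
intros Hom HL Hb.
set (E := osc_energy om2 q q1 t) in *. set (w := (q2 t + RtoC om2 * q t)%C) in *.
assert (HdE : 2 * (Re (q1 t) * Re (q2 t) + Im (q1 t) * Im (q2 t))
    + om2 * (2 * (Re (q t) * Re (q1 t) + Im (q t) * Im (q1 t)))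
    = 2 * (Re (q1 t) * Re w + Im (q1 t) * Im w)) by (unfold w; unfold_C; ring).
rewrite HdE.
pose proof (Re_Im_dot_le_Cmod (q1 t) w) as Hcs.
assert (Hq1 : Cmod (q1 t) <= sqrt E) by (apply Cmod_le_sqrt_osc_energy; exact Hom).
assert (HE : sqrt E * sqrt E = E) by (apply sqrt_sqrt, osc_energy_ge0; exact Hom).
pose proof (Cmod_ge_0 (q1 t)). pose proof (Cmod_ge_0 w). pose proof (sqrt_pos E).
assert (Cmod (q1 t) * Cmod w <= sqrt E * (c + L * sqrt E)) by (apply Rmult_le_compat; lra).
pose proof (pow2_ge_0 (sqrt E - c)). nra.
Qed.

(* Gronwall for [E], via the nonincreasing function [E t * exp (-k t) - c^2 t]. *)
Lemma osc_energy_bound (q q1 q2 : R -> C) om2 c L T :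
  0 <= om2 -> 0 <= L -> 0 <= T ->
  (forall t, 0 <= t <= T -> is_derive q t (q1 t) /\ is_derive q1 t (q2 t) /\
      Cmod (q2 t + RtoC om2 * q t)%C <= c + L * sqrt (osc_energy om2 q q1 t)) ->
  forall t, 0 <= t <= T ->
    osc_energy om2 q q1 t <= (osc_energy om2 q q1 0 + c ^ 2 * T) * exp ((2 * L + 1) * T).
Proof.
intros Hom HL HT H t Ht.
set (k := 2 * L + 1). set (E := osc_energy om2 q q1).
set (dE := fun t => 2 * (Re (q1 t) * Re (q2 t) + Im (q1 t) * Im (q2 t))
                    + om2 * (2 * (Re (q t) * Re (q1 t) + Im (q t) * Im (q1 t)))).
assert (HdE : forall s, 0 <= s <= T -> is_derive E s (dE s)).
{ intros s Hs. destruct (H s Hs) as [H1 [H2 _]].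
  exact (is_derive_Rplus _ _ _ _ _ (is_derive_Cmod2 _ _ _ H2)
           (is_derive_scal _ _ om2 _ (is_derive_Cmod2 _ _ _ H1))). }
set (phi := fun t => E t * exp (- (k * t)) - c ^ 2 * t).
assert (Hphi : phi t <= phi 0).
{ apply (le_0_of_derive_nonpos phi (fun t => (dE t - k * E t) * exp (- (k * t)) - c ^ 2) T); [| exact Ht].
  intros s Hs. split.
  - apply (is_derive_ext_eq (fun x => E x * exp (- (k * x)) - c ^ 2 * x) _ s
      (dE s * exp (- (k * s)) + E s * (- k * exp (- (k * s))) - c ^ 2 * 1)); [reflexivity | ring |].
    apply is_derive_Rminus.
    + apply (is_derive_Rmult E (fun x => exp (- (k * x)))); [apply HdE; exact Hs |].
      auto_derive; [easy | ring].
    + auto_derive; [easy | ring].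
  - destruct (H s Hs) as [_ [_ Hb]].
    pose proof (osc_energy_derive_le q q1 q2 om2 c L s Hom HL Hb) as HdEb.
    change (dE s <= k * E s + c ^ 2) in HdEb.
    assert (0 < exp (- (k * s))) by apply exp_pos.
    assert (exp (- (k * s)) <= 1) by (rewrite <- exp_0; apply exp_le_exp_of_le; unfold k; nra).
    assert ((dE s - k * E s) * exp (- (k * s)) <= c ^ 2 * exp (- (k * s)))
      by (apply Rmult_le_compat_r; lra).
    assert (0 <= c ^ 2) by apply pow2_ge_0.
    nra. }
unfold phi in Hphi.
rewrite Rmult_0_r, Ropp_0, exp_0, Rmult_0_r, Rmult_1_r, Rminus_0_r in Hphi.
assert (Hex : exp (- (k * t)) * exp (k * t) = 1)
  by (rewrite <- exp_plus; replace (- (k * t) + k * t) with 0 by ring; apply exp_0).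
assert (E t <= (E 0 + c ^ 2 * t) * exp (k * t)).
{ replace (E t) with (E t * exp (- (k * t)) * exp (k * t)) by (rewrite Rmult_assoc, Hex; ring).
  apply Rmult_le_compat_r; [left; apply exp_pos | lra]. }
assert (0 <= E 0) by (apply osc_energy_ge0; exact Hom).
assert (exp (k * t) <= exp (k * T)) by (apply exp_le_exp_of_le; unfold k; nra).
assert ((E 0 + c ^ 2 * t) * exp (k * t) <= (E 0 + c ^ 2 * T) * exp (k * T)).
{ apply Rmult_le_compat; try nra; left; apply exp_pos. }
unfold E, k in *. lra.
Qed.

(** * The phase equations for [z_+] and [z_-] *)

Lemma phase_eq_of_equation (z1 z : C) (alpha g : R) :
  (2 * Ci * z1 + RtoC alpha * z + RtoC g * z = 0)%C -> z1 = (Ci * RtoC (/ 2 * g + alpha / 2) * z)%C.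
Proof.
destruct z1 as [a1 a2], z as [b1 b2]. intros Heq. unfold_C.
injection Heq; intros E2 E1. apply C_ext; unfold_C; lra.
Qed.

Lemma Cmod_const_of_phase_eq (z z1 : R -> C) (k : R -> R) T :
  (forall t, 0 <= t <= T -> is_derive z t (z1 t) /\ z1 t = (Ci * RtoC (k t) * z t)%C) ->
  forall t, 0 <= t <= T -> Cmod (z t) = Cmod (z 0).
Proof.
intros H t Ht.
assert (Hc : Cmod (z t) ^ 2 = Cmod (z 0) ^ 2).
{ apply (eq_0_of_derive_0 (fun s => Cmod (z s) ^ 2) T); [| exact Ht].
  intros s Hs. destruct (H s Hs) as [Hz Hz1].
  eapply is_derive_ext_eq; [reflexivity | | exact (is_derive_Cmod2 _ _ _ Hz)].
  rewrite Hz1. unfold_C. ring. }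
apply Rsqr_inj; try apply Cmod_ge_0. unfold Rsqr. nra.
Qed.

(* [z t - cis (mu t) z 0] solves the same phase equation and vanishes at 0. *)
Lemma phase_eq_explicit (z z1 : R -> C) (mu T : R) :
  (forall t, 0 <= t <= T -> is_derive z t (z1 t) /\ z1 t = (Ci * RtoC mu * z t)%C) ->
  forall t, 0 <= t <= T -> z t = (cis (mu * t) * z 0)%C.
Proof.
intros H t Ht.
set (w := fun s => (z s - z 0 * cis (mu * s))%C).
assert (Hw : Cmod (w t) = Cmod (w 0)).
{ apply (Cmod_const_of_phase_eq w (fun s => z1 s - Ci * RtoC mu * z 0 * cis (mu * s))%C
           (fun _ => mu) T); [| exact Ht].
  intros s Hs. destruct (H s Hs) as [Hz Hz1]. split.
  - exact (is_derive_minus z _ s _ _ Hz (is_derive_cis_mult (z 0) mu s)).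
  - unfold w. rewrite Hz1. ring. }
unfold w in Hw. rewrite Rmult_0_r, cis_0, Cmult_1_r in Hw.
replace (z 0 - z 0)%C with (RtoC 0) in Hw by ring. rewrite Cmod_0 in Hw.
apply Cmod_eq_0 in Hw. apply (f_equal (fun x => x + z 0 * cis (mu * t))%C) in Hw.
rewrite Cplus_0_l in Hw. rewrite Cmult_comm, <- Hw. ring.
Qed.

Lemma phase_eq_derivatives (z z1 z2 z3 : R -> C) (mu T : R) : 0 < T ->
  (forall t, 0 <= t <= T -> is_derive z t (z1 t) /\ is_derive z1 t (z2 t) /\ is_derive z2 t (z3 t)
     /\ z1 t = (Ci * RtoC mu * z t)%C) ->
  forall t, 0 <= t <= T -> z t = (cis (mu * t) * z 0)%C /\
    Cmod (z t) = Cmod (z 0) /\ Cmod (z1 t) = Rabs mu * Cmod (z 0) /\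
    Cmod (z2 t) = Rabs mu ^ 2 * Cmod (z 0) /\ Cmod (z3 t) = Rabs mu ^ 3 * Cmod (z 0).
Proof.
intros HT H.
set (c := (Ci * RtoC mu)%C).
assert (Hz : forall t, 0 <= t <= T -> z t = (cis (mu * t) * z 0)%C).
{ apply (phase_eq_explicit z z1 mu T). intros t Ht. destruct (H t Ht) as [A1 [_ [_ A4]]]. auto. }
assert (Hz1 : forall t, 0 <= t <= T -> z1 t = (c * z 0 * cis (mu * t))%C).
{ intros t Ht. destruct (H t Ht) as [_ [_ [_ A4]]]. rewrite A4, Hz by exact Ht. unfold c. ring. }
assert (Hz2 : forall t, 0 <= t <= T -> z2 t = (c * (c * z 0) * cis (mu * t))%C).
{ intros t Ht. destruct (H t Ht) as [_ [A2 _]].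
  exact (is_derive_C_unique_on z1 _ t _ _ T A2 (is_derive_cis_mult _ mu t) HT Ht Hz1). }
assert (Hz3 : forall t, 0 <= t <= T -> z3 t = (c * (c * (c * z 0)) * cis (mu * t))%C).
{ intros t Ht. destruct (H t Ht) as [_ [_ [A3 _]]].
  exact (is_derive_C_unique_on z2 _ t _ _ T A3 (is_derive_cis_mult _ mu t) HT Ht Hz2). }
assert (Hc : Cmod c = Rabs mu) by (unfold c; rewrite Cmod_mult, Cmod_Ci, Cmod_R; ring).
intros t Ht. repeat split.
- exact (Hz t Ht).
- rewrite (Hz t Ht), Cmod_cis_mult. reflexivity.
- rewrite (Hz1 t Ht), !Cmod_mult, Cmod_cis, Hc. ring.
- rewrite (Hz2 t Ht), !Cmod_mult, Cmod_cis, Hc. ring.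
- rewrite (Hz3 t Ht), !Cmod_mult, Cmod_cis, Hc. ring.
Qed.

(** * Bounds on the nonlinearity *)

Lemma pow_le_pow_bound x B n N : 0 <= x <= B -> 1 <= B -> (n <= N)%nat -> x ^ n <= B ^ N.
Proof. intros Hx HB Hn. apply Rle_trans with (B ^ n); [apply pow_incr; exact Hx | apply Rle_pow; auto]. Qed.

Lemma pow_mult_le a A b Bb n : 0 <= a <= A -> 0 <= b <= Bb -> a ^ n * b <= A ^ n * Bb.
Proof.
intros Ha Hb. apply Rmult_le_compat; try lra; [apply pow_le; lra | apply pow_incr; exact Ha].
Qed.

Lemma Rabs_rsum_le n (F : nat -> R) K :
  (forall i, (i < n)%nat -> Rabs (F i) <= K) -> Rabs (rsum n F) <= INR n * K.
Proof.
induction n as [| n IHn]; intros H; cbn [rsum].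
- rewrite Rabs_R0. simpl INR. lra.
- eapply Rle_trans; [apply Rabs_triang |]. rewrite S_INR.
  assert (Rabs (rsum n F) <= INR n * K) by (apply IHn; intros; apply H; lia).
  assert (Rabs (F n) <= K) by (apply H; lia). lra.
Qed.

Lemma Rabs_tri_sum_le q F K :
  0 <= K ->
  (forall p1 p2 p3, (2 * p2 + p3 <= q)%nat -> p1 = (q - 2 * p2 - p3)%nat -> Rabs (F p1 p2 p3) <= K) ->
  Rabs (tri_sum q F) <= INR (S q) * (2 * K).
Proof.
intros HK H. unfold tri_sum. apply Rabs_rsum_le. intros p2 Hp2.
replace (2 * K) with (INR 2 * K) by (simpl; ring). apply Rabs_rsum_le. intros p3 Hp3.
destruct (Nat.leb (2 * p2 + p3) q) eqn:E.
- apply Nat.leb_le in E. apply H; auto.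
- rewrite Rabs_R0. exact HK.
Qed.

Lemma Cmod_csum1_le n (F : nat -> C) K :
  (forall k, (1 <= k <= n)%nat -> Cmod (F k) <= K) -> Cmod (csum1 n F) <= INR n * K.
Proof.
induction n as [| n IHn]; intros H; cbn [csum1].
- rewrite Cmod_0. simpl INR. lra.
- eapply Rle_trans; [apply Cmod_triangle |]. rewrite S_INR.
  assert (Cmod (csum1 n F) <= INR n * K) by (apply IHn; intros; apply H; lia).
  assert (Cmod (F (S n)) <= K) by (apply H; lia). lra.
Qed.

Lemma g_plus_minus_bounded (lambda : R) (p : nat) (M : R) :
  0 <= M -> exists G, 0 <= G /\ forall a b, 0 <= a <= M -> 0 <= b <= M ->
    Rabs (g_plus lambda p a b) <= G /\ Rabs (g_minus lambda p a b) <= G.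
Proof.
intros HM. set (Bb := 1 + 2 * M + M * M).
assert (HB : 1 <= Bb) by (unfold Bb; nra).
assert (HBp : 0 <= Bb ^ p) by (apply pow_le; lra).
set (K := Rabs lambda * (Bb ^ p * Bb ^ p * Bb ^ p)).
assert (HK : 0 <= K) by (unfold K; apply Rmult_le_pos; [apply Rabs_pos | nra]).
exists (INR (S p) * (2 * K)). split; [apply Rmult_le_pos; [apply pos_INR | lra] |].
intros a b Ha Hb.
assert (Hterm : forall x y z, 0 <= x <= Bb -> 0 <= y <= Bb -> 0 <= z <= Bb ->
  forall p1 p2 p3, (2 * p2 + p3 <= p)%nat -> p1 = (p - 2 * p2 - p3)%nat ->
  Rabs (lambda * x ^ p1 * y ^ p2 * z ^ p3) <= K).
{ intros x y z Hx Hy Hz p1 p2 p3 H1 H2.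
  rewrite !Rabs_mult, (Rabs_pos_eq (x ^ p1)), (Rabs_pos_eq (y ^ p2)), (Rabs_pos_eq (z ^ p3))
    by (apply pow_le; lra).
  unfold K. rewrite !Rmult_assoc. apply Rmult_le_compat_l; [apply Rabs_pos |].
  assert (x ^ p1 <= Bb ^ p) by (apply pow_le_pow_bound; auto; lia).
  assert (y ^ p2 <= Bb ^ p) by (apply pow_le_pow_bound; auto; lia).
  assert (z ^ p3 <= Bb ^ p) by (apply pow_le_pow_bound; auto; lia).
  assert (0 <= x ^ p1) by (apply pow_le; lra). assert (0 <= y ^ p2) by (apply pow_le; lra).
  assert (0 <= z ^ p3) by (apply pow_le; lra).
  apply Rmult_le_compat; nra. }
split; apply Rabs_tri_sum_le; auto; intros; apply Hterm; auto; unfold Bb; nra.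
Qed.

Lemma g_k_bounded (lambda : R) (p : nat) (M : R) :
  0 <= M -> exists G, 0 <= G /\ forall k a b, (k <= p)%nat -> Cmod a <= M -> Cmod b <= M ->
    Cmod (g_k lambda p k a b) <= G.
Proof.
intros HM. set (Bb := 1 + 2 * M * M + M).
assert (HB : 1 <= Bb) by (unfold Bb; nra).
assert (HB2p : 0 <= Bb ^ (2 * p)) by (apply pow_le; lra).
assert (HBSp : 0 <= Bb ^ S p) by (apply pow_le; lra).
assert (HBp : 0 <= Bb ^ p) by (apply pow_le; lra).
set (K := Bb ^ (2 * p) * Bb ^ (2 * p) * Bb ^ (2 * p)).
assert (HK : 0 <= K) by (unfold K; nra).
pose proof (Rabs_pos lambda). pose proof (pos_INR (S p)).
exists (Rabs lambda * Bb ^ S p * Bb ^ p * (INR (S p) * (2 * K))).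
split; [apply Rmult_le_pos; [apply Rmult_le_pos; [apply Rmult_le_pos |] |]; nra |].
intros k a b Hk Ha Hb.
pose proof (Cmod_ge_0 a). pose proof (Cmod_ge_0 b).
unfold g_k. rewrite !Cmod_mult, !Cmod_R, !Cmod_pow.
assert (HS : Rabs (g_k_sum lambda p k a b) <= INR (S p) * (2 * K)).
{ eapply Rle_trans; [unfold g_k_sum; apply Rabs_tri_sum_le; [exact HK |] |].
  - intros p1 p2 p3 Hp123 Hp1. rewrite !Rabs_mult.
    rewrite (Rabs_pos_eq ((Cmod a ^ 2 + Cmod b ^ 2) ^ p1)), (Rabs_pos_eq (Cmod a ^ (2 * p2))),
      (Rabs_pos_eq (Cmod b ^ (2 * p2 + 2 * p3))) by (apply pow_le; nra).
    assert ((Cmod a ^ 2 + Cmod b ^ 2) ^ p1 <= Bb ^ (2 * p))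
      by (apply pow_le_pow_bound; [split; unfold Bb; nra | exact HB | lia]).
    assert (Cmod a ^ (2 * p2) <= Bb ^ (2 * p))
      by (apply pow_le_pow_bound; [split; unfold Bb; nra | exact HB | lia]).
    assert (Cmod b ^ (2 * p2 + 2 * p3) <= Bb ^ (2 * p))
      by (apply pow_le_pow_bound; [split; unfold Bb; nra | exact HB | lia]).
    assert (0 <= (Cmod a ^ 2 + Cmod b ^ 2) ^ p1) by (apply pow_le; nra).
    assert (0 <= Cmod a ^ (2 * p2)) by (apply pow_le; nra).
    assert (0 <= Cmod b ^ (2 * p2 + 2 * p3)) by (apply pow_le; nra).
    unfold K. apply Rmult_le_compat; nra.
  - apply Rmult_le_compat_r; [lra | apply le_INR; lia]. }
assert (Cmod a ^ S k <= Bb ^ S p) by (apply pow_le_pow_bound; [split; unfold Bb; nra | exact HB | lia]).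
assert (Cmod b ^ k <= Bb ^ p) by (apply pow_le_pow_bound; [split; unfold Bb; nra | exact HB | lia]).
assert (0 <= Cmod a ^ S k) by (apply pow_le; nra). assert (0 <= Cmod b ^ k) by (apply pow_le; nra).
pose proof (Rabs_pos (g_k_sum lambda p k a b)).
assert (Rabs lambda * Cmod a ^ S k * Cmod b ^ k <= Rabs lambda * Bb ^ S p * Bb ^ p)
  by (apply Rmult_le_compat; try apply Rmult_le_compat_l; nra).
apply Rmult_le_compat; try nra. apply Rmult_le_pos; [apply Rmult_le_pos |]; lra.
Qed.

Lemma Rabs_pow_sub_le (x y R : R) n : 0 <= x <= R -> 0 <= y <= R ->
  Rabs (x ^ n - y ^ n) <= INR n * (R + 1) ^ n * Rabs (x - y).
Proof.
intros Hx Hy. induction n as [| n IHn].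
- simpl. rewrite Rminus_eq_0, Rabs_R0. lra.
- replace (x ^ S n - y ^ S n) with (x * (x ^ n - y ^ n) + y ^ n * (x - y)) by (simpl; ring).
  eapply Rle_trans; [apply Rabs_triang |]. rewrite !Rabs_mult.
  rewrite (Rabs_pos_eq x) by lra. rewrite (Rabs_pos_eq (y ^ n)) by (apply pow_le; lra).
  assert (y ^ n <= (R + 1) ^ n) by (apply pow_incr; lra).
  assert (1 <= (R + 1) ^ n) by (apply pow_R1_Rle; lra).
  pose proof (Rabs_pos (x - y)). pose proof (Rabs_pos (x ^ n - y ^ n)). pose proof (pos_INR n).
  assert (x * Rabs (x ^ n - y ^ n) <= (R + 1) * (INR n * (R + 1) ^ n * Rabs (x - y)))
    by (apply Rmult_le_compat; lra).
  assert (y ^ n * Rabs (x - y) <= (R + 1) ^ n * Rabs (x - y)) by (apply Rmult_le_compat_r; lra).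
  assert ((R + 1) ^ n * Rabs (x - y) <= (R + 1) * ((R + 1) ^ n * Rabs (x - y))).
  { rewrite <- (Rmult_1_l ((R + 1) ^ n * Rabs (x - y))) at 1. apply Rmult_le_compat_r; nra. }
  replace (INR (S n) * (R + 1) ^ S n * Rabs (x - y)) with
    ((R + 1) * (INR n * (R + 1) ^ n * Rabs (x - y)) + (R + 1) * ((R + 1) ^ n * Rabs (x - y)))
    by (rewrite S_INR; simpl; ring).
  lra.
Qed.

Lemma ffun_locally_lipschitz (lambda : R) (p : nat) (R0 : R) : 0 <= R0 ->
  exists L, 0 <= L /\ forall a b, Cmod a <= R0 -> Cmod b <= R0 ->
    Cmod (ffun lambda p a - ffun lambda p b) <= L * Cmod (a - b).
Proof.
intros HR.
set (L1 := Rabs lambda * (R0 ^ 2) ^ p).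
set (L2 := Rabs lambda * (INR p * (R0 ^ 2 + 1) ^ p) * (2 * R0) * R0).
assert (0 <= (R0 ^ 2) ^ p) by (apply pow_le; nra).
assert (0 <= (R0 ^ 2 + 1) ^ p) by (apply pow_le; nra).
pose proof (pos_INR p). pose proof (Rabs_pos lambda).
exists (L1 + L2). split.
{ unfold L1, L2. apply Rplus_le_le_0_compat; [nra |].
  apply Rmult_le_pos; [apply Rmult_le_pos; [apply Rmult_le_pos |] |]; nra. }
intros a b Ha Hb. pose proof (Cmod_ge_0 a). pose proof (Cmod_ge_0 b). pose proof (Cmod_ge_0 (a - b)).
set (ga := gfun lambda p (Cmod a ^ 2)). set (gb := gfun lambda p (Cmod b ^ 2)).
assert (E : (ffun lambda p a - ffun lambda p b = RtoC ga * (a - b) + RtoC (ga - gb) * b)%C).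
{ unfold ffun. fold ga gb. rewrite RtoC_minus. ring. }
rewrite E. eapply Rle_trans; [apply Cmod_triangle |]. rewrite !Cmod_mult, !Cmod_R.
assert (Hga : Rabs ga <= L1).
{ unfold ga, gfun, L1. rewrite Rabs_mult. apply Rmult_le_compat_l; [lra |].
  rewrite Rabs_pos_eq by (apply pow_le; nra). apply pow_incr. nra. }
assert (Hgab : Rabs (ga - gb) <= Rabs lambda * (INR p * (R0 ^ 2 + 1) ^ p) * (2 * R0) * Cmod (a - b)).
{ unfold ga, gb, gfun.
  replace (lambda * (Cmod a ^ 2) ^ p - lambda * (Cmod b ^ 2) ^ p)
    with (lambda * ((Cmod a ^ 2) ^ p - (Cmod b ^ 2) ^ p)) by ring.
  rewrite Rabs_mult, !Rmult_assoc. apply Rmult_le_compat_l; [lra |].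
  eapply Rle_trans; [apply (Rabs_pow_sub_le _ _ (R0 ^ 2)); split; nra |].
  rewrite <- Rmult_assoc. apply Rmult_le_compat_l; [nra |].
  replace (Cmod a ^ 2 - Cmod b ^ 2) with ((Cmod a - Cmod b) * (Cmod a + Cmod b)) by ring.
  rewrite Rabs_mult, (Rabs_pos_eq (Cmod a + Cmod b)) by lra.
  pose proof (Rabs_Cmod_sub_le a b). pose proof (Rabs_pos (Cmod a - Cmod b)).
  replace (2 * (R0 * Cmod (a - b))) with (Cmod (a - b) * (2 * R0)) by ring.
  apply Rmult_le_compat; lra. }
assert (Rabs ga * Cmod (a - b) <= L1 * Cmod (a - b)) by (apply Rmult_le_compat_r; lra).
assert (Rabs (ga - gb) * Cmod b
        <= Rabs lambda * (INR p * (R0 ^ 2 + 1) ^ p) * (2 * R0) * Cmod (a - b) * R0)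
  by (apply Rmult_le_compat; auto; apply Rabs_pos).
unfold L2. nra.
Qed.

Lemma Cmod_wfun_le eps a b s : Cmod (wfun eps a b s) <= Cmod a + Cmod b.
Proof.
unfold wfun. eapply Rle_trans; [apply Cmod_triangle |].
rewrite !Cmod_cis_mult, Cmod_conj. lra.
Qed.

Lemma Cmod_hfun_le lambda p eps zp zm r s M B Lf :
  (forall a b, Cmod a <= 2 * M + B -> Cmod b <= 2 * M + B ->
     Cmod (ffun lambda p a - ffun lambda p b) <= Lf * Cmod (a - b)) ->
  Cmod zp <= M -> Cmod zm <= M -> 0 <= B -> Cmod r <= B ->
  Cmod (hfun lambda p eps zp zm r s) <= Lf * Cmod r.
Proof.
intros Hlip Hzp Hzm HB Hr. unfold hfun. set (w := wfun eps zp zm s).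
assert (Hw : Cmod w <= 2 * M) by (eapply Rle_trans; [apply Cmod_wfun_le | lra]).
replace (Cmod r) with (Cmod ((w + r) - w)%C) by (f_equal; ring).
apply Hlip; [eapply Rle_trans; [apply Cmod_triangle | lra] | lra].
Qed.

Lemma Cmod_z0_le (eps M : R) (yn ydn : C) : 0 < eps -> Cmod yn <= M -> Cmod ydn <= M / eps ^ 2 ->
  Cmod (z_plus0 eps yn ydn) <= M /\ Cmod (z_minus0 eps yn ydn) <= M.
Proof.
intros He Hy Hd.
assert (He2 : 0 < eps ^ 2) by (apply pow_lt; lra).
assert (Hd' : eps ^ 2 * Cmod ydn <= M).
{ apply Rmult_le_compat_l with (r := eps ^ 2) in Hd; [| lra].
  replace (eps ^ 2 * (M / eps ^ 2)) with M in Hd by (field; lra). exact Hd. }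
assert (Hci : forall x : C, Cmod (Ci * RtoC (eps ^ 2) * x) = eps ^ 2 * Cmod x).
{ intros x. rewrite !Cmod_mult, Cmod_Ci, Cmod_R, Rabs_pos_eq by lra. ring. }
assert (H2 : Cmod (RtoC (/ 2)) = / 2) by (rewrite Cmod_R; apply Rabs_pos_eq; lra).
unfold z_plus0, z_minus0. split; rewrite Cmod_mult, H2.
- assert (Cmod (yn - Ci * RtoC (eps ^ 2) * ydn) <= Cmod yn + eps ^ 2 * Cmod ydn)
    by (eapply Rle_trans; [apply Cmod_sub_le | rewrite Hci; lra]).
  lra.
- assert (Cmod (Cconj yn - Ci * RtoC (eps ^ 2) * Cconj ydn) <= Cmod yn + eps ^ 2 * Cmod ydn)
    by (eapply Rle_trans; [apply Cmod_sub_le | rewrite Hci, !Cmod_conj; lra]).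
  lra.
Qed.

Lemma Cmod_rdot0_le alpha lambda p eps yn ydn Mu M :
  Rabs (mu_plus alpha lambda p eps yn ydn) <= Mu -> Rabs (mu_minus alpha lambda p eps yn ydn) <= Mu ->
  Cmod (z_plus0 eps yn ydn) <= M -> Cmod (z_minus0 eps yn ydn) <= M ->
  Cmod (rdot0 alpha lambda p eps yn ydn) <= 2 * (Mu * M).
Proof.
intros Hmup Hmum Hzp Hzm. unfold rdot0.
eapply Rle_trans; [apply Cmod_sub_le |].
rewrite Cmod_opp, Cmod_conj, !Cmod_mult, Cmod_Ci, !Cmod_R.
pose proof (Rabs_pos (mu_plus alpha lambda p eps yn ydn)).
pose proof (Rabs_pos (mu_minus alpha lambda p eps yn ydn)).
pose proof (Cmod_ge_0 (z_plus0 eps yn ydn)). pose proof (Cmod_ge_0 (z_minus0 eps yn ydn)).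
assert (Rabs (mu_plus alpha lambda p eps yn ydn) * Cmod (z_plus0 eps yn ydn) <= Mu * M)
  by (apply Rmult_le_compat; lra).
assert (Rabs (mu_minus alpha lambda p eps yn ydn) * Cmod (z_minus0 eps yn ydn) <= Mu * M)
  by (apply Rmult_le_compat; lra).
lra.
Qed.

(** * The oscillatory part of [g_r] and its corrector *)

Definition g_osc (lambda : R) (p : nat) (eps : R) (zp zm : C) (t : R) : C :=
  csum1 p (fun k =>
      g_k lambda p k zp zm * cis (INR (2 * k + 1) * t / eps ^ 2)
      + Cconj (g_k lambda p k zm zp) * cis (- (INR (2 * k + 1) * t / eps ^ 2)))%C.

Lemma g_r_split lambda p eps zp zm r s :
  g_r lambda p eps zp zm r s = (g_osc lambda p eps zp zm s + hfun lambda p eps zp zm r s)%C.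
Proof. reflexivity. Qed.

Lemma is_derive_csum1 n (F F' : nat -> R -> C) t :
  (forall k, is_derive (F k) t (F' k t)) ->
  is_derive (fun s => csum1 n (fun k => F k s)) t (csum1 n (fun k => F' k t)).
Proof.
intros H. induction n as [| n IHn]; cbn [csum1].
- apply @is_derive_const.
- exact (is_derive_plus _ _ t _ _ IHn (H (S n))).
Qed.

Lemma is_derive_csum1_cis n (a b : nat -> C) (v w : nat -> R) t :
  is_derive (fun s => csum1 n (fun k => a k * cis (v k * s) + b k * cis (w k * s))%C) t
    (csum1 n (fun k => Ci * RtoC (v k) * a k * cis (v k * t) + Ci * RtoC (w k) * b k * cis (w k * t))%C).
Proof.
apply (is_derive_csum1 n (fun k s => a k * cis (v k * s) + b k * cis (w k * s))%C
  (fun k s => Ci * RtoC (v k) * a k * cis (v k * s) + Ci * RtoC (w k) * b k * cis (w k * s))%C).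
intros k. exact (is_derive_plus _ _ t _ _ (is_derive_cis_mult _ _ t) (is_derive_cis_mult _ _ t)).
Qed.

Lemma csum1_ext n F G : (forall k, (1 <= k <= n)%nat -> F k = G k) -> csum1 n F = csum1 n G.
Proof.
induction n as [| n IHn]; intros H; cbn [csum1]; [reflexivity |].
rewrite IHn, (H (S n)); [reflexivity | lia | intros; apply H; lia].
Qed.

Lemma csum1_add n F G : (csum1 n F + csum1 n G)%C = csum1 n (fun k => F k + G k)%C.
Proof. induction n as [| n IHn]; cbn [csum1]; [ring | rewrite <- IHn; ring]. Qed.

Lemma csum1_scal n c F : (c * csum1 n F)%C = csum1 n (fun k => c * F k)%C.
Proof. induction n as [| n IHn]; cbn [csum1]; [ring | rewrite <- IHn; ring]. Qed.

Lemma csum1_zero n : csum1 n (fun _ => RtoC 0) = RtoC 0.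
Proof. induction n as [| n IHn]; cbn [csum1]; [reflexivity | rewrite IHn; ring]. Qed.

Lemma g_k_cis_mult lambda p k a b x y :
  g_k lambda p k (cis a * x) (cis b * y) = (cis (INR (S k) * a + INR k * b) * g_k lambda p k x y)%C.
Proof. unfold g_k, g_k_sum. rewrite !Cmod_cis_mult, !Cpow_cis_mult, <- cis_add. ring. Qed.

Lemma Cmod_g_osc_le lambda p eps zp zm t Kg :
  (forall k, (1 <= k <= p)%nat ->
     Cmod (g_k lambda p k zp zm) <= Kg /\ Cmod (g_k lambda p k zm zp) <= Kg) ->
  Cmod (g_osc lambda p eps zp zm t) <= INR p * (2 * Kg).
Proof.
intros Hg. unfold g_osc. apply Cmod_csum1_le. intros k Hk.
eapply Rle_trans; [apply Cmod_triangle |].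
rewrite !Cmod_mult, !Cmod_cis, Cmod_conj. destruct (Hg k Hk). lra.
Qed.

Lemma g_osc_modes lambda p eps mup mum zp0 zm0 t : eps <> 0 ->
  g_osc lambda p eps (cis (mup * t) * zp0) (cis (mum * t) * zm0) t =
  csum1 p (fun k =>
    g_k lambda p k zp0 zm0 * cis ((INR (2 * k + 1) / eps ^ 2 + (INR (S k) * mup + INR k * mum)) * t)
    + Cconj (g_k lambda p k zm0 zp0)
      * cis (- (INR (2 * k + 1) / eps ^ 2 + (INR (S k) * mum + INR k * mup)) * t))%C.
Proof.
intros He. unfold g_osc. apply csum1_ext. intros k Hk.
rewrite !g_k_cis_mult, Cmult_conj, cis_conj. f_equal.
- rewrite (Cmult_comm (cis _) (g_k _ _ _ _ _)), <- Cmult_assoc, cis_add. do 2 f_equal. field. exact He.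
- rewrite (Cmult_comm (cis _) (Cconj _)), <- Cmult_assoc, cis_add. do 2 f_equal. field. exact He.
Qed.

(* The particular solution of [P'' + om2 P = - a cis (v t) / e] for a single mode. *)
Lemma mode_corrector_eq (a x : C) (v om2 e : R) : e <> 0 -> om2 - v ^ 2 <> 0 ->
  (Ci * RtoC v * (Ci * RtoC v * (RtoC (- / (e * (om2 - v ^ 2))) * a)) * x
   + RtoC om2 * (RtoC (- / (e * (om2 - v ^ 2))) * a * x) + RtoC (/ e) * (a * x))%C = RtoC 0.
Proof.
intros He Hn. destruct a as [a1 a2], x as [x1 x2].
apply C_ext; unfold_C; field; (split; [exact He |]); intros Hc; apply Hn; simpl; lra.
Qed.

(* Frequencies [v] with [eps^2 v] close to [m >= 3] stay away from [omega ~ 1/eps^2]. *)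
Lemma nonresonant_coefficient_le (m c v eps Mu alpha : R) :
  3 <= m -> 0 <= alpha -> 0 <= Mu -> 0 < eps <= 1 -> Rabs c <= m * Mu ->
  eps ^ 2 * Mu <= / 4 -> eps ^ 2 * alpha <= 1 -> v ^ 2 = (m / eps ^ 2 + c) ^ 2 ->
  let om2 := (alpha + / eps ^ 2) / eps ^ 2 in
  om2 - v ^ 2 <> 0 /\ Rabs (/ (eps ^ 2 * (om2 - v ^ 2))) <= eps ^ 2 / 3 /\
  Rabs v * Rabs (/ (eps ^ 2 * (om2 - v ^ 2))) <= m * (1 + Mu).
Proof.
intros Hm Ha HMu He Hc H1 H2 Hv om2.
set (e2 := eps ^ 2) in *.
assert (He2 : 0 < e2) by (apply pow_lt; lra).
assert (He21 : e2 <= 1) by (unfold e2; rewrite <- (pow1 2); apply pow_incr; lra).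
assert (Hev : (e2 * v) ^ 2 = (m + e2 * c) ^ 2).
{ replace ((e2 * v) ^ 2) with (e2 ^ 2 * v ^ 2) by ring. rewrite Hv. field. lra. }
assert (Ho : e2 ^ 2 * om2 = e2 * alpha + 1) by (unfold om2, e2; field; lra).
pose proof (Rle_abs c) as Hc'. pose proof (Rle_abs (- c)) as Hc''. rewrite Rabs_Ropp in Hc''.
assert (e2 * Rabs c <= e2 * (m * Mu)) by (apply Rmult_le_compat_l; lra).
assert (m * (e2 * Mu) <= m * / 4) by (apply Rmult_le_compat_l; lra).
assert (e2 * (m * Mu) <= m * Mu) by (rewrite <- (Rmult_1_l (m * Mu)) at 2; apply Rmult_le_compat_r; nra).
assert (Hc1 : Rabs (e2 * c) <= m / 4) by (rewrite Rabs_mult, (Rabs_pos_eq e2) by lra; lra).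
assert (Hc2 : Rabs (e2 * c) <= m * Mu) by (rewrite Rabs_mult, (Rabs_pos_eq e2) by lra; lra).
set (D := e2 ^ 2 * (v ^ 2 - om2)).
assert (HD : 3 <= D).
{ unfold D. replace (e2 ^ 2 * (v ^ 2 - om2)) with ((e2 * v) ^ 2 - e2 ^ 2 * om2) by ring.
  rewrite Hev, Ho. pose proof (Rle_abs (e2 * c)). pose proof (Rle_abs (- (e2 * c))) as Hec.
  rewrite Rabs_Ropp in Hec. assert (9 / 4 <= m + e2 * c) by lra. nra. }
assert (Hne : om2 - v ^ 2 <> 0).
{ intros Hz. unfold D in HD. replace (v ^ 2 - om2) with (- (om2 - v ^ 2)) in HD by ring.
  rewrite Hz in HD. lra. }
assert (Hco : / (e2 * (om2 - v ^ 2)) = - (e2 / D)).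
{ unfold D. replace (v ^ 2 - om2) with (- (om2 - v ^ 2)) by ring. field. lra. }
assert (Hev' : Rabs (e2 * v) = Rabs (m + e2 * c)).
{ apply Rsqr_eq_abs_0. unfold Rsqr. nra. }
rewrite Hco, Rabs_Ropp, Rabs_pos_eq by (apply Rlt_le, Rdiv_lt_0_compat; lra).
split; [exact Hne | split].
- unfold Rdiv. apply Rmult_le_compat_l; [lra | apply Rinv_le_contravar; lra].
- replace (Rabs v * (e2 / D)) with (Rabs (e2 * v) / D)
    by (rewrite Rabs_mult, (Rabs_pos_eq e2) by lra; field; lra).
  rewrite Hev'. pose proof (Rle_abs (e2 * c)). pose proof (Rle_abs (- (e2 * c))) as Hec.
  rewrite Rabs_Ropp in Hec.
  assert (Hm1 : Rabs (m + e2 * c) <= m * (1 + Mu)) by (apply Rabs_le; lra).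
  pose proof (Rabs_pos (m + e2 * c)).
  apply Rle_trans with (Rabs (m + e2 * c)); [| exact Hm1].
  unfold Rdiv. rewrite <- (Rmult_1_r (Rabs (m + e2 * c))) at 2.
  apply Rmult_le_compat_l; [lra |]. rewrite <- Rinv_1. apply Rinv_le_contravar; lra.
Qed.

Lemma Cmod_g_osc_cis_le lambda p eps mup mum zp0 zm0 t Kg :
  (forall k, (1 <= k <= p)%nat ->
     Cmod (g_k lambda p k zp0 zm0) <= Kg /\ Cmod (g_k lambda p k zm0 zp0) <= Kg) ->
  Cmod (g_osc lambda p eps (cis (mup * t) * zp0) (cis (mum * t) * zm0) t) <= INR p * (2 * Kg).
Proof.
intros Hg. apply Cmod_g_osc_le. intros k Hk.
rewrite !g_k_cis_mult, !Cmod_cis_mult. exact (Hg k Hk).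
Qed.

Section Corrector.

Variables (lambda : R) (p : nat) (alpha Mu Kg eps mup mum : R) (zp0 zm0 : C).
Hypotheses (Halpha : 0 <= alpha) (HMu : 0 <= Mu) (HKg : 0 <= Kg) (Heps : 0 < eps <= 1)
  (Hmup : Rabs mup <= Mu) (Hmum : Rabs mum <= Mu)
  (Hg : forall k, (1 <= k <= p)%nat ->
     Cmod (g_k lambda p k zp0 zm0) <= Kg /\ Cmod (g_k lambda p k zm0 zp0) <= Kg).

Let om2 := (alpha + / eps ^ 2) / eps ^ 2.
Let g_osc_t t := g_osc lambda p eps (cis (mup * t) * zp0) (cis (mum * t) * zm0) t.

Section SmallEps.

Hypothesis Hsmall : eps ^ 2 * (4 * Mu + alpha + 1) <= 1.

Let nu k := INR (2 * k + 1) / eps ^ 2 + (INR (S k) * mup + INR k * mum).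
Let nu' k := - (INR (2 * k + 1) / eps ^ 2 + (INR (S k) * mum + INR k * mup)).
Let A k := g_k lambda p k zp0 zm0.
Let Bc k := Cconj (g_k lambda p k zm0 zp0).
Let co v := RtoC (- / (eps ^ 2 * (om2 - v ^ 2))).

Let corr t := csum1 p (fun k => co (nu k) * A k * cis (nu k * t) + co (nu' k) * Bc k * cis (nu' k * t))%C.
Let corr1 t := csum1 p (fun k => Ci * RtoC (nu k) * (co (nu k) * A k) * cis (nu k * t)
                        + Ci * RtoC (nu' k) * (co (nu' k) * Bc k) * cis (nu' k * t))%C.
Let corr2 t := csum1 p (fun k => Ci * RtoC (nu k) * (Ci * RtoC (nu k) * (co (nu k) * A k)) * cis (nu k * t)
                 + Ci * RtoC (nu' k) * (Ci * RtoC (nu' k) * (co (nu' k) * Bc k)) * cis (nu' k * t))%C.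

Lemma corrector_frequency_le k v : (1 <= k <= p)%nat -> v = nu k \/ v = nu' k ->
  om2 - v ^ 2 <> 0 /\ Cmod (co v) <= eps ^ 2 / 3 /\ Rabs v * Cmod (co v) <= (2 * INR p + 1) * (1 + Mu).
Proof.
intros Hk Hv.
assert (H1 : eps ^ 2 * Mu <= / 4) by (pose proof (pow2_ge_0 eps); nra).
assert (H2 : eps ^ 2 * alpha <= 1) by (pose proof (pow2_ge_0 eps); nra).
assert (Hkk : 3 <= INR (2 * k + 1)) by (replace 3 with (INR 3) by (simpl; ring); apply le_INR; lia).
assert (Hkp : INR (2 * k + 1) <= 2 * INR p + 1).
{ replace (2 * INR p + 1) with (INR (2 * p + 1)) by (rewrite plus_INR, mult_INR; simpl; ring).
  apply le_INR. lia. }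
assert (HSk : INR (S k) + INR k = INR (2 * k + 1)) by (rewrite S_INR, plus_INR, mult_INR; simpl; ring).
pose proof (pos_INR k). pose proof (pos_INR (S k)).
assert (Hc : forall a b, Rabs a <= Mu -> Rabs b <= Mu ->
          Rabs (INR (S k) * a + INR k * b) <= INR (2 * k + 1) * Mu).
{ intros a b Ha Hb. eapply Rle_trans; [apply Rabs_triang |].
  rewrite !Rabs_mult, (Rabs_pos_eq (INR (S k))), (Rabs_pos_eq (INR k)) by lra.
  rewrite <- HSk, Rmult_plus_distr_r. apply Rplus_le_compat; apply Rmult_le_compat_l; lra. }
assert (Hnr : exists c, Rabs c <= INR (2 * k + 1) * Mu /\ v ^ 2 = (INR (2 * k + 1) / eps ^ 2 + c) ^ 2).
{ destruct Hv as [-> | ->];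
    [exists (INR (S k) * mup + INR k * mum) | exists (INR (S k) * mum + INR k * mup)];
    (split; [apply Hc; assumption | unfold nu, nu'; ring]). }
destruct Hnr as [c [Hc1 Hc2]].
destruct (nonresonant_coefficient_le (INR (2 * k + 1)) c v eps Mu alpha Hkk Halpha HMu Heps Hc1 H1 H2 Hc2)
  as [F1 [F2 F3]].
unfold co. rewrite Cmod_R, Rabs_Ropp.
split; [exact F1 | split; [exact F2 |]].
eapply Rle_trans; [exact F3 |]. apply Rmult_le_compat_r; lra.
Qed.

Lemma corrector_is_derive t : is_derive corr t (corr1 t) /\ is_derive corr1 t (corr2 t).
Proof. split; apply is_derive_csum1_cis. Qed.

Lemma Cmod_corrector_le t : Cmod (corr t) <= 2 * INR p * Kg * eps ^ 2.
Proof.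
replace (2 * INR p * Kg * eps ^ 2) with (INR p * (2 * (eps ^ 2 / 3 * Kg) + 4 / 3 * eps ^ 2 * Kg)) by field.
apply Cmod_csum1_le. intros k Hk.
destruct (corrector_frequency_le k (nu k) Hk (or_introl eq_refl)) as [_ [F1 _]].
destruct (corrector_frequency_le k (nu' k) Hk (or_intror eq_refl)) as [_ [F1' _]].
assert (HA : Cmod (A k) <= Kg) by apply (Hg k Hk).
assert (HB : Cmod (Bc k) <= Kg) by (unfold Bc; rewrite Cmod_conj; apply (Hg k Hk)).
eapply Rle_trans; [apply Cmod_triangle |]. rewrite !Cmod_mult, !Cmod_cis.
assert (Cmod (co (nu k)) * Cmod (A k) <= eps ^ 2 / 3 * Kg)
  by (apply Rmult_le_compat; auto; apply Cmod_ge_0).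
assert (Cmod (co (nu' k)) * Cmod (Bc k) <= eps ^ 2 / 3 * Kg)
  by (apply Rmult_le_compat; auto; apply Cmod_ge_0).
assert (0 <= eps ^ 2 * Kg) by (apply Rmult_le_pos; [apply pow2_ge_0 | lra]).
lra.
Qed.

Lemma Cmod_corrector_derivative_le t : Cmod (corr1 t) <= 2 * INR p * Kg * ((2 * INR p + 1) * (1 + Mu)).
Proof.
replace (2 * INR p * Kg * ((2 * INR p + 1) * (1 + Mu)))
  with (INR p * (2 * ((2 * INR p + 1) * (1 + Mu) * Kg))) by ring.
apply Cmod_csum1_le. intros k Hk.
destruct (corrector_frequency_le k (nu k) Hk (or_introl eq_refl)) as [_ [_ F2]].
destruct (corrector_frequency_le k (nu' k) Hk (or_intror eq_refl)) as [_ [_ F2']].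
assert (HA : Cmod (A k) <= Kg) by apply (Hg k Hk).
assert (HB : Cmod (Bc k) <= Kg) by (unfold Bc; rewrite Cmod_conj; apply (Hg k Hk)).
eapply Rle_trans; [apply Cmod_triangle |]. rewrite !Cmod_mult, !Cmod_cis, Cmod_Ci, !Cmod_R.
pose proof (Rabs_pos (nu k)). pose proof (Rabs_pos (nu' k)).
pose proof (Cmod_ge_0 (co (nu k))). pose proof (Cmod_ge_0 (co (nu' k))).
assert (Rabs (nu k) * Cmod (co (nu k)) * Cmod (A k) <= (2 * INR p + 1) * (1 + Mu) * Kg)
  by (apply Rmult_le_compat; auto; [apply Rmult_le_pos | apply Cmod_ge_0]; lra).
assert (Rabs (nu' k) * Cmod (co (nu' k)) * Cmod (Bc k) <= (2 * INR p + 1) * (1 + Mu) * Kg)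
  by (apply Rmult_le_compat; auto; [apply Rmult_le_pos | apply Cmod_ge_0]; lra).
lra.
Qed.

Lemma corrector_eq t : (corr2 t + RtoC om2 * corr t + RtoC (/ eps ^ 2) * g_osc_t t)%C = RtoC 0.
Proof.
assert (He2 : 0 < eps ^ 2) by (apply pow_lt; lra).
unfold g_osc_t. rewrite (g_osc_modes lambda p eps mup mum zp0 zm0 t ltac:(lra)).
unfold corr, corr2. rewrite !csum1_scal, !csum1_add, <- (csum1_zero p). apply csum1_ext. intros k Hk.
destruct (corrector_frequency_le k (nu k) Hk (or_introl eq_refl)) as [F3 _].
destruct (corrector_frequency_le k (nu' k) Hk (or_intror eq_refl)) as [F3' _].
pose proof (mode_corrector_eq (A k) (cis (nu k * t)) (nu k) om2 (eps ^ 2) ltac:(lra) F3) as K1.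
pose proof (mode_corrector_eq (Bc k) (cis (nu' k * t)) (nu' k) om2 (eps ^ 2) ltac:(lra) F3') as K2.
fold (co (nu k)) in K1. fold (co (nu' k)) in K2.
unfold nu, nu', A, Bc in *.
rewrite <- (Cplus_0_l (RtoC 0)), <- K1 at 1. rewrite <- K2. ring.
Qed.

End SmallEps.

(* For [eps] bounded below the oscillatory term is itself [O(1)], and [P = 0] will do. *)
Lemma oscillation_corrector :
  exists P P1 P2 : R -> C,
   (forall t, is_derive P t (P1 t) /\ is_derive P1 t (P2 t)) /\
   (forall t, Cmod (P t) <= 2 * INR p * Kg * eps ^ 2 /\
              Cmod (P1 t) <= 2 * INR p * Kg * ((2 * INR p + 1) * (1 + Mu))) /\
   (forall t, Cmod (P2 t + RtoC om2 * P t + RtoC (/ eps ^ 2) * g_osc_t t)%C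
      <= 2 * INR p * Kg * (4 * Mu + alpha + 1)).
Proof.
assert (He2 : 0 < eps ^ 2) by (apply pow_lt; lra).
assert (HpK : 0 <= 2 * INR p * Kg) by (pose proof (pos_INR p); nra).
destruct (Rle_dec (eps ^ 2 * (4 * Mu + alpha + 1)) 1) as [Hsmall | Hlarge].
- eexists _, _, _. split; [exact corrector_is_derive |].
  split; [intros t; split; [apply Cmod_corrector_le | apply Cmod_corrector_derivative_le]; exact Hsmall |].
  intros t. rewrite (corrector_eq Hsmall), Cmod_0. apply Rmult_le_pos; lra.
- exists (fun _ => RtoC 0), (fun _ => RtoC 0), (fun _ => RtoC 0).
  split; [intros; split; apply @is_derive_const |].
  split.
  { intros t; rewrite Cmod_0. pose proof (pos_INR p).
    split; apply Rmult_le_pos; try lra; apply Rmult_le_pos; lra. }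
  intros t. rewrite Cmult_0_r, !Cplus_0_l, Cmod_RtoC_mult.
  rewrite Rabs_pos_eq by (apply Rlt_le, Rinv_0_lt_compat; lra).
  assert (Ho := Cmod_g_osc_cis_le lambda p eps mup mum zp0 zm0 t Kg Hg). fold (g_osc_t t) in Ho.
  assert (/ eps ^ 2 <= 4 * Mu + alpha + 1).
  { apply Rnot_le_lt in Hlarge. rewrite <- (Rmult_1_l (/ eps ^ 2)).
    apply Rmult_le_reg_l with (eps ^ 2); [lra |]. field_simplify; lra. }
  pose proof (Cmod_ge_0 (g_osc_t t)).
  apply Rle_trans with ((4 * Mu + alpha + 1) * (INR p * (2 * Kg))); [| right; ring].
  apply Rmult_le_compat; try lra. apply Rlt_le, Rinv_0_lt_compat; lra.
Qed.

End Corrector.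

(** * Energy estimate for the remainder [r] *)

Lemma remainder_equation (r2 r P2 P O h U : C) (eps alpha : R) : eps <> 0 ->
  (RtoC (eps ^ 2) * r2 + RtoC (alpha + / eps ^ 2) * r + (O + h) + RtoC (eps ^ 2) * U = 0)%C ->
  (r2 - P2 + RtoC ((alpha + / eps ^ 2) / eps ^ 2) * (r - P)
     = - (P2 + RtoC ((alpha + / eps ^ 2) / eps ^ 2) * P + RtoC (/ eps ^ 2) * O)
       - RtoC (/ eps ^ 2) * h - U)%C.
Proof.
intros He Hq.
destruct r2 as [a1 a2], r as [b1 b2], P2 as [c1 c2], P as [d1 d2], O as [o1 o2], h as [h1 h2],
  U as [u1 u2].
unfold_C. injection Hq; intros E2 E1.
apply C_ext; unfold_C; apply Rminus_diag_uniq.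
- match type of E1 with ?X = 0 => transitivity (/ eps ^ 2 * X) end; [field; exact He | rewrite E1; ring].
- match type of E2 with ?X = 0 => transitivity (/ eps ^ 2 * X) end; [field; exact He | rewrite E2; ring].
Qed.

Section Remainder.

Variables (alpha eps tau KP KP1 KD Ku Lf B R1 : R) (r r1 r2 P P1 P2 O h U : R -> C).

Let om2 := (alpha + / eps ^ 2) / eps ^ 2.
Let Em := 2 * ((R1 + KP1) ^ 2 + (1 + alpha) * KP ^ 2 + 1).
Let c := KD + Ku + Lf * KP.

Hypotheses (Halpha : 0 <= alpha) (Heps : 0 < eps <= 1) (Htau : 0 <= tau) (HLf : 0 <= Lf)
  (Hr_der : forall t, 0 <= t <= tau -> is_derive r t (r1 t) /\ is_derive r1 t (r2 t))
  (HP_der : forall t, 0 <= t <= tau -> is_derive P t (P1 t) /\ is_derive P1 t (P2 t))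
  (Hr_eq : forall t, 0 <= t <= tau ->
     (RtoC (eps ^ 2) * r2 t + RtoC (alpha + / eps ^ 2) * r t + (O t + h t)
      + RtoC (eps ^ 2) * U t = 0)%C)
  (HP : forall t, 0 <= t <= tau -> Cmod (P t) <= KP * eps ^ 2 /\ Cmod (P1 t) <= KP1)
  (HPO : forall t, 0 <= t <= tau ->
     Cmod (P2 t + RtoC om2 * P t + RtoC (/ eps ^ 2) * O t)%C <= KD)
  (HU : forall t, 0 <= t <= tau -> Cmod (U t) <= Ku)
  (Hh : forall t, 0 <= t <= tau -> Cmod (r t) <= B -> Cmod (h t) <= Lf * Cmod (r t))
  (Hr0 : r 0 = RtoC 0) (Hr10 : Cmod (r1 0) <= R1)
  (HB : sqrt Em + KP < B) (Htau_c : c ^ 2 * tau <= 1) (Htau_L : exp ((2 * Lf + 1) * tau) <= 2).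

Let q t := (r t - P t)%C.
Let q1 t := (r1 t - P1 t)%C.
Let q2 t := (r2 t - P2 t)%C.

Lemma remainder_om2_ge : / (eps ^ 2) ^ 2 <= om2.
Proof.
assert (0 < eps ^ 2) by (apply pow_lt; lra).
unfold om2. replace ((alpha + / eps ^ 2) / eps ^ 2) with (alpha / eps ^ 2 + / (eps ^ 2) ^ 2)
  by (field; lra).
assert (0 <= alpha / eps ^ 2) by (apply Rdiv_le_0_compat; lra). lra.
Qed.

Lemma remainder_om2_pos : 0 < om2.
Proof.
pose proof remainder_om2_ge.
assert (0 < / (eps ^ 2) ^ 2) by (apply Rinv_0_lt_compat, pow_lt, pow_lt; lra). lra.
Qed.

Lemma Cmod_r_le_energy t :
  0 <= t <= tau -> Cmod (r t) <= eps ^ 2 * (sqrt (osc_energy om2 q q1 t) + KP).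
Proof.
intros Ht.
replace (r t) with (q t + P t)%C by (unfold q; ring).
eapply Rle_trans; [apply Cmod_triangle |].
pose proof (Cmod_le_scaled_sqrt_osc_energy om2 (eps ^ 2) q q1 t ltac:(apply pow_lt; lra) remainder_om2_ge).
pose proof (proj1 (HP t Ht)). lra.
Qed.

Lemma remainder_initial_energy : osc_energy om2 q q1 0 <= (R1 + KP1) ^ 2 + (1 + alpha) * KP ^ 2.
Proof.
assert (He2 : 0 < eps ^ 2) by (apply pow_lt; lra).
assert (He21 : eps ^ 2 <= 1) by (rewrite <- (pow1 2); apply pow_incr; lra).
assert (H0 : 0 <= 0 <= tau) by lra.
destruct (HP 0 H0) as [HP0 HP10].
assert (Hq1 : Cmod (q1 0) <= R1 + KP1) by (eapply Rle_trans; [apply Cmod_sub_le | lra]).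
assert (Hq : Cmod (q 0) <= KP * eps ^ 2).
{ unfold q. rewrite Hr0. replace (RtoC 0 - P 0)%C with (- P 0)%C by ring. rewrite Cmod_opp. exact HP0. }
pose proof (Cmod_ge_0 (q1 0)). pose proof (Cmod_ge_0 (q 0)).
assert (Cmod (q1 0) ^ 2 <= (R1 + KP1) ^ 2) by (apply pow_incr; lra).
assert (Cmod (q 0) ^ 2 <= (KP * eps ^ 2) ^ 2) by (apply pow_incr; lra).
assert (om2 * Cmod (q 0) ^ 2 <= om2 * (KP * eps ^ 2) ^ 2)
  by (apply Rmult_le_compat_l; pose proof remainder_om2_pos; lra).
assert (om2 * (KP * eps ^ 2) ^ 2 = (alpha * eps ^ 2 + 1) * KP ^ 2) by (unfold om2; field; lra).
assert ((alpha * eps ^ 2 + 1) * KP ^ 2 <= (1 + alpha) * KP ^ 2)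
  by (apply Rmult_le_compat_r; [apply pow2_ge_0 | nra]).
unfold osc_energy. lra.
Qed.

Lemma remainder_forcing_le t :
  0 <= t <= tau -> Cmod (r t) <= B ->
  Cmod (q2 t + RtoC om2 * q t)%C <= c + Lf * sqrt (osc_energy om2 q q1 t).
Proof.
intros Ht Hrt.
assert (He2 : 0 < eps ^ 2) by (apply pow_lt; lra).
change (q2 t + RtoC om2 * q t)%C with (r2 t - P2 t + RtoC om2 * (r t - P t))%C.
rewrite (remainder_equation _ _ _ _ _ _ _ eps alpha ltac:(lra) (Hr_eq t Ht)). fold om2.
pose proof (Cmod_r_le_energy t Ht) as Hr.
assert (Hhe : Cmod (RtoC (/ eps ^ 2) * h t) <= Lf * (sqrt (osc_energy om2 q q1 t) + KP)).
{ rewrite Cmod_RtoC_mult, Rabs_pos_eq by (apply Rlt_le, Rinv_0_lt_compat; lra).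
  apply Rle_trans with (/ eps ^ 2 * (Lf * Cmod (r t))).
  - apply Rmult_le_compat_l; [apply Rlt_le, Rinv_0_lt_compat; lra | apply Hh; assumption].
  - apply Rle_trans with (/ eps ^ 2 * (Lf * (eps ^ 2 * (sqrt (osc_energy om2 q q1 t) + KP)))).
    + apply Rmult_le_compat_l; [apply Rlt_le, Rinv_0_lt_compat; lra |].
      apply Rmult_le_compat_l; assumption.
    + right. field. lra. }
pose proof (HPO t Ht). pose proof (HU t Ht).
eapply Rle_trans; [apply Cmod_sub_le |].
eapply Rle_trans; [apply Rplus_le_compat_r, Cmod_sub_le |].
rewrite Cmod_opp. unfold c. lra.
Qed.

Lemma remainder_energy_le s :
  0 <= s <= tau -> (forall t, 0 <= t <= s -> Cmod (r t) <= B) -> osc_energy om2 q q1 s <= Em.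
Proof.
intros Hs Hbd.
pose proof remainder_om2_pos.
assert (Hc : 0 <= c ^ 2 * s) by (apply Rmult_le_pos; [apply pow2_ge_0 | lra]).
assert (Hcs : c ^ 2 * s <= 1)
  by (apply Rle_trans with (c ^ 2 * tau); [apply Rmult_le_compat_l; [apply pow2_ge_0 | lra] | exact Htau_c]).
assert (Hexp : exp ((2 * Lf + 1) * s) <= 2)
  by (apply Rle_trans with (exp ((2 * Lf + 1) * tau));
      [apply exp_le_exp_of_le, Rmult_le_compat_l; lra | exact Htau_L]).
assert (HE := osc_energy_bound q q1 q2 om2 c Lf s ltac:(lra) HLf ltac:(lra)).
specialize (HE ltac:(intros t Ht; assert (Ht' : 0 <= t <= tau) by lra;
  destruct (Hr_der t Ht') as [Hr Hr1]; destruct (HP_der t Ht') as [HP0 HP1];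
  refine (conj (is_derive_minus _ _ t _ _ Hr HP0) (conj (is_derive_minus _ _ t _ _ Hr1 HP1) _));
  apply remainder_forcing_le; [exact Ht' | apply Hbd; exact Ht])).
specialize (HE s ltac:(lra)).
pose proof remainder_initial_energy. pose proof (osc_energy_ge0 om2 q q1 0 ltac:(lra)).
assert ((osc_energy om2 q q1 0 + c ^ 2 * s) * exp ((2 * Lf + 1) * s)
        <= ((R1 + KP1) ^ 2 + (1 + alpha) * KP ^ 2 + 1) * 2)
  by (apply Rmult_le_compat; [lra | left; apply exp_pos | lra | exact Hexp]).
unfold Em. lra.
Qed.

Lemma remainder_bound t : 0 <= t <= tau -> Cmod (r t) <= eps ^ 2 * (sqrt Em + KP).
Proof.
assert (He2 : 0 < eps ^ 2) by (apply pow_lt; lra).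
assert (He21 : eps ^ 2 <= 1) by (rewrite <- (pow1 2); apply pow_incr; lra).
assert (HKP : 0 <= KP) by (pose proof (proj1 (HP 0 ltac:(lra))); pose proof (Cmod_ge_0 (P 0)); nra).
pose proof (sqrt_pos Em).
apply (continuity_argument (fun t => Cmod (r t)) tau B); [exact Htau | nra | | | ].
- intros s Hs. exact (continuity_pt_Cmod r s _ (proj1 (Hr_der s Hs))).
- simpl. rewrite Hr0, Cmod_0. nra.
- intros s Hs Hbd. eapply Rle_trans; [apply Cmod_r_le_energy; exact Hs |].
  apply Rmult_le_compat_l; [lra |]. apply Rplus_le_compat_r, sqrt_le_1_alt.
  apply remainder_energy_le; assumption.
Qed.

Lemma remainder_derivative_bound t : 0 <= t <= tau -> Cmod (r1 t) <= sqrt Em + KP1.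
Proof.
intros Ht.
replace (r1 t) with (q1 t + P1 t)%C by (unfold q1; ring).
eapply Rle_trans; [apply Cmod_triangle |].
pose proof remainder_om2_pos.
assert (HKP : 0 <= KP) by (pose proof (proj1 (HP 0 ltac:(lra))); pose proof (Cmod_ge_0 (P 0));
  assert (0 < eps ^ 2) by (apply pow_lt; lra); nra).
assert (Hbd : forall u, 0 <= u <= t -> Cmod (r u) <= B).
{ intros u Hu. eapply Rle_trans; [apply remainder_bound; lra |].
  assert (0 < eps ^ 2) by (apply pow_lt; lra).
  assert (eps ^ 2 <= 1) by (rewrite <- (pow1 2); apply pow_incr; lra).
  pose proof (sqrt_pos Em). nra. }
assert (Cmod (q1 t) <= sqrt Em).
{ eapply Rle_trans; [apply (Cmod_le_sqrt_osc_energy om2 q q1 t); lra |].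
  apply sqrt_le_1_alt, remainder_energy_le; assumption. }
pose proof (proj2 (HP t Ht)). lra.
Qed.

Lemma remainder_second_derivative_bound KO t :
  0 <= t <= tau -> Cmod (O t) <= KO ->
  eps ^ 2 * Cmod (r2 t) <= (alpha + 1) * (sqrt Em + KP) + KO + Lf * (sqrt Em + KP) + Ku.
Proof.
intros Ht HO.
assert (He2 : 0 < eps ^ 2) by (apply pow_lt; lra).
assert (He21 : eps ^ 2 <= 1) by (rewrite <- (pow1 2); apply pow_incr; lra).
pose proof (remainder_bound t Ht) as Hr.
pose proof (Cmod_ge_0 (r t)).
assert (HB0 : Cmod (r t) <= sqrt Em + KP).
{ eapply Rle_trans; [exact Hr |]. assert (0 <= sqrt Em + KP) by nra. nra. }
assert (Hrt : Cmod (r t) <= B) by lra.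
assert (Heq : (RtoC (eps ^ 2) * r2 t
   = - (RtoC (alpha + / eps ^ 2) * r t + O t + h t + RtoC (eps ^ 2) * U t))%C).
{ pose proof (Hr_eq t Ht) as E.
  set (Y := (RtoC (alpha + / eps ^ 2) * r t + O t + h t + RtoC (eps ^ 2) * U t)%C).
  replace (RtoC (eps ^ 2) * r2 t)%C
    with ((RtoC (eps ^ 2) * r2 t + RtoC (alpha + / eps ^ 2) * r t + (O t + h t)
           + RtoC (eps ^ 2) * U t) - Y)%C by (unfold Y; ring).
  rewrite E. ring. }
replace (eps ^ 2 * Cmod (r2 t)) with (Cmod (RtoC (eps ^ 2) * r2 t))
  by (rewrite Cmod_RtoC_mult, Rabs_pos_eq; lra).
rewrite Heq, Cmod_opp.
assert (H1 : Cmod (RtoC (alpha + / eps ^ 2) * r t) <= (alpha + 1) * (sqrt Em + KP)).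
{ rewrite Cmod_RtoC_mult, Rabs_pos_eq by (pose proof (Rinv_0_lt_compat _ He2); lra).
  replace ((alpha + / eps ^ 2) * Cmod (r t)) with ((alpha * eps ^ 2 + 1) * (Cmod (r t) / eps ^ 2))
    by (field; lra).
  apply Rmult_le_compat; [nra | apply Rdiv_le_0_compat; lra | nra |].
  apply Rmult_le_reg_l with (eps ^ 2); [lra |].
  replace (eps ^ 2 * (Cmod (r t) / eps ^ 2)) with (Cmod (r t)) by (field; lra). exact Hr. }
assert (H2 : Cmod (RtoC (eps ^ 2) * U t) <= Ku).
{ rewrite Cmod_RtoC_mult, Rabs_pos_eq by lra.
  pose proof (HU t Ht). pose proof (Cmod_ge_0 (U t)). nra. }
assert (H3 : Cmod (h t) <= Lf * (sqrt Em + KP))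
  by (eapply Rle_trans; [apply Hh; assumption | apply Rmult_le_compat_l; assumption]).
eapply Rle_trans; [apply Cmod_triangle |].
eapply Rle_trans; [apply Rplus_le_compat_r, Cmod_triangle |].
eapply Rle_trans; [apply Rplus_le_compat_r, Rplus_le_compat_r, Cmod_triangle |].
lra.
Qed.

Lemma remainder_estimates KO :
  (forall t, 0 <= t <= tau -> Cmod (O t) <= KO) ->
  forall t, 0 <= t <= tau ->
    Cmod (r t) <= eps ^ 2 * (sqrt Em + KP) /\ Cmod (r1 t) <= sqrt Em + KP1 /\
    eps ^ 2 * Cmod (r2 t) <= (alpha + 1) * (sqrt Em + KP) + KO + Lf * (sqrt Em + KP) + Ku.
Proof.
intros HO t Ht. split; [| split].
- exact (remainder_bound t Ht).
- exact (remainder_derivative_bound t Ht).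
- exact (remainder_second_derivative_bound KO t Ht (HO t Ht)).
Qed.

End Remainder.

(** * Solutions of the decomposed system *)

Lemma is_solution_phase_eqs alpha lambda p eps tau yn ydn zp zp1 zp2 zp3 zm zm1 zm2 zm3 r r1 r2 :
  is_solution alpha lambda p eps tau yn ydn zp zp1 zp2 zp3 zm zm1 zm2 zm3 r r1 r2 ->
  (forall t, 0 <= t <= tau -> is_derive zp t (zp1 t) /\ is_derive zp1 t (zp2 t) /\
     is_derive zp2 t (zp3 t) /\ zp1 t = (Ci * RtoC (mu_plus alpha lambda p eps yn ydn) * zp t)%C) /\
  (forall t, 0 <= t <= tau -> is_derive zm t (zm1 t) /\ is_derive zm1 t (zm2 t) /\
     is_derive zm2 t (zm3 t) /\ zm1 t = (Ci * RtoC (mu_minus alpha lambda p eps yn ydn) * zm t)%C).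
Proof.
intros [Hsys [Hzp0 [Hzm0 _]]].
assert (Hmodp : forall t, 0 <= t <= tau -> Cmod (zp t) = Cmod (zp 0)).
{ apply (Cmod_const_of_phase_eq zp zp1
    (fun t => / 2 * g_plus lambda p (Cmod (zp t) ^ 2) (Cmod (zm t) ^ 2) + alpha / 2) tau).
  intros t Ht. destruct (Hsys t Ht) as [D1 [_ [_ [_ [_ [_ [_ [_ [Eq1 _]]]]]]]]].
  split; [exact D1 | exact (phase_eq_of_equation _ _ _ _ Eq1)]. }
assert (Hmodm : forall t, 0 <= t <= tau -> Cmod (zm t) = Cmod (zm 0)).
{ apply (Cmod_const_of_phase_eq zm zm1
    (fun t => / 2 * g_minus lambda p (Cmod (zp t) ^ 2) (Cmod (zm t) ^ 2) + alpha / 2) tau).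
  intros t Ht. destruct (Hsys t Ht) as [_ [_ [_ [D4 [_ [_ [_ [_ [_ [Eq2 _]]]]]]]]]].
  split; [exact D4 | exact (phase_eq_of_equation _ _ _ _ Eq2)]. }
split; intros t Ht;
  destruct (Hsys t Ht) as [D1 [D2 [D3 [D4 [D5 [D6 [_ [_ [Eq1 [Eq2 _]]]]]]]]]];
  [pose proof (phase_eq_of_equation _ _ _ _ Eq1) as Hz | pose proof (phase_eq_of_equation _ _ _ _ Eq2) as Hz];
  rewrite (Hmodp t Ht), (Hmodm t Ht), Hzp0, Hzm0 in Hz; (split; [assumption | split; [assumption | split; [assumption | exact Hz]]]).
Qed.

Lemma Rabs_mu_plus_minus_le alpha lambda p eps yn ydn M G :
  0 <= alpha -> 0 <= M ->
  (forall a b, 0 <= a <= M * M -> 0 <= b <= M * M ->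
     Rabs (g_plus lambda p a b) <= G /\ Rabs (g_minus lambda p a b) <= G) ->
  Cmod (z_plus0 eps yn ydn) <= M -> Cmod (z_minus0 eps yn ydn) <= M ->
  Rabs (mu_plus alpha lambda p eps yn ydn) <= G / 2 + alpha / 2 /\
  Rabs (mu_minus alpha lambda p eps yn ydn) <= G / 2 + alpha / 2.
Proof.
intros Ha HM HG Hp Hm.
pose proof (Cmod_ge_0 (z_plus0 eps yn ydn)). pose proof (Cmod_ge_0 (z_minus0 eps yn ydn)).
destruct (HG (Cmod (z_plus0 eps yn ydn) ^ 2) (Cmod (z_minus0 eps yn ydn) ^ 2)) as [Gp Gm];
  try (split; nra).
assert (Hhalf : forall g, Rabs g <= G -> Rabs (/ 2 * g + alpha / 2) <= G / 2 + alpha / 2).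
{ intros g Hg. pose proof (Rle_abs g). pose proof (Rle_abs (- g)). rewrite Rabs_Ropp in *.
  apply Rabs_le. lra. }
split; apply Hhalf; assumption.
Qed.

Lemma short_time_le c L tau : 0 <= L ->
  0 < tau <= Rmin (/ (c ^ 2 + 1)) (ln 2 / (2 * L + 1)) ->
  c ^ 2 * tau <= 1 /\ exp ((2 * L + 1) * tau) <= 2.
Proof.
intros HL [Htau0 Htau]. pose proof (pow2_ge_0 c).
split.
- assert (tau <= / (c ^ 2 + 1)) by (eapply Rle_trans; [exact Htau | apply Rmin_l]).
  apply Rle_trans with (c ^ 2 * / (c ^ 2 + 1)); [apply Rmult_le_compat_l; lra |].
  apply Rmult_le_reg_r with (c ^ 2 + 1); [lra |]. rewrite Rmult_assoc, Rinv_l by lra. lra.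
- assert (tau <= ln 2 / (2 * L + 1)) by (eapply Rle_trans; [exact Htau | apply Rmin_r]).
  apply Rle_trans with (exp (ln 2)); [| rewrite exp_ln; lra]. apply exp_le_exp_of_le.
  apply Rle_trans with ((2 * L + 1) * (ln 2 / (2 * L + 1))); [apply Rmult_le_compat_l; lra |].
  right. field. lra.
Qed.

Section UniformBounds.

Variables (alpha lambda : R) (p : nat) (M G Kg : R).

(* [Mu] bounds the frequencies [mu_pm]; [KP], [KP1] bound the corrector and its derivative and
   [KD] its residual; [Ku] bounds the [z''] forcing term, [R1] the initial velocity [r'(0)], [Em]
   the energy of [r - P]; [B] is the a priori radius of the continuity argument. *)
Let Mu := G / 2 + alpha / 2.
Let KP := 2 * INR p * Kg.
Let KP1 := KP * ((2 * INR p + 1) * (1 + Mu)).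
Let KD := KP * (4 * Mu + alpha + 1).
Let Ku := 2 * (Mu ^ 2 * M).
Let R1 := 2 * (Mu * M).
Let Em := 2 * ((R1 + KP1) ^ 2 + (1 + alpha) * KP ^ 2 + 1).
Let B := sqrt Em + KP + 1.

Hypotheses (Halpha : 0 <= alpha) (HM : 0 <= M) (HG : 0 <= G) (HKg : 0 <= Kg)
  (Hg_pm : forall a b, 0 <= a <= M * M -> 0 <= b <= M * M ->
     Rabs (g_plus lambda p a b) <= G /\ Rabs (g_minus lambda p a b) <= G)
  (Hg_k : forall k a b, (k <= p)%nat -> Cmod a <= M -> Cmod b <= M -> Cmod (g_k lambda p k a b) <= Kg).

Section Solution.

Variables (eps tau : R) (yn ydn : C) (zp zp1 zp2 zp3 zm zm1 zm2 zm3 r r1 r2 : R -> C).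
Hypotheses (Heps : 0 < eps <= 1) (Htau : 0 < tau) (Hyn : Cmod yn <= M) (Hydn : Cmod ydn <= M / eps ^ 2)
  (Hsol : is_solution alpha lambda p eps tau yn ydn zp zp1 zp2 zp3 zm zm1 zm2 zm3 r r1 r2).

Let zp0 := z_plus0 eps yn ydn.
Let zm0 := z_minus0 eps yn ydn.
Let mup := mu_plus alpha lambda p eps yn ydn.
Let mum := mu_minus alpha lambda p eps yn ydn.

Lemma solution_mu_le : Rabs mup <= Mu /\ Rabs mum <= Mu.
Proof.
destruct (Cmod_z0_le eps M yn ydn ltac:(lra) Hyn Hydn).
apply (Rabs_mu_plus_minus_le alpha lambda p eps yn ydn M G); assumption.
Qed.

Lemma solution_z_explicit t : 0 <= t <= tau ->
  zp t = (cis (mup * t) * zp0)%C /\ zm t = (cis (mum * t) * zm0)%C /\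
  Cmod (zp t) <= M /\ Cmod (zp1 t) <= Mu * M /\ Cmod (zp2 t) <= Mu ^ 2 * M /\ Cmod (zp3 t) <= Mu ^ 3 * M /\
  Cmod (zm t) <= M /\ Cmod (zm1 t) <= Mu * M /\ Cmod (zm2 t) <= Mu ^ 2 * M /\ Cmod (zm3 t) <= Mu ^ 3 * M.
Proof.
intros Ht.
destruct (Cmod_z0_le eps M yn ydn ltac:(lra) Hyn Hydn) as [Bp Bm].
destruct solution_mu_le as [Hmup Hmum].
destruct (is_solution_phase_eqs _ _ _ _ _ _ _ _ _ _ _ _ _ _ _ _ _ _ Hsol) as [Zp Zm].
destruct Hsol as [_ [Hzp0 [Hzm0 _]]].
destruct (phase_eq_derivatives _ _ _ _ _ _ Htau Zp t Ht) as [Ep [Ep0 [Ep1 [Ep2 Ep3]]]].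
destruct (phase_eq_derivatives _ _ _ _ _ _ Htau Zm t Ht) as [Em0 [Em0' [Em1 [Em2 Em3]]]].
rewrite Hzp0 in Ep, Ep0, Ep1, Ep2, Ep3. rewrite Hzm0 in Em0, Em0', Em1, Em2, Em3.
fold zp0 zm0 mup mum in Bp, Bm, Ep, Ep0, Ep1, Ep2, Ep3, Em0, Em0', Em1, Em2, Em3.
pose proof (Cmod_ge_0 zp0). pose proof (Cmod_ge_0 zm0).
pose proof (Rabs_pos mup). pose proof (Rabs_pos mum).
assert (Hp : forall n, Rabs mup ^ n * Cmod zp0 <= Mu ^ n * M) by (intros; apply pow_mult_le; lra).
assert (Hm : forall n, Rabs mum ^ n * Cmod zm0 <= Mu ^ n * M) by (intros; apply pow_mult_le; lra).
specialize (Hp 1%nat) as Hp1. specialize (Hm 1%nat) as Hm1. rewrite !pow_1 in Hp1, Hm1.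
rewrite Ep0, Ep1, Ep2, Ep3, Em0', Em1, Em2, Em3.
repeat split; auto.
Qed.

Lemma solution_zdd_le t : 0 <= t <= tau ->
  Cmod (cis (t / eps ^ 2) * zp2 t + cis (- (t / eps ^ 2)) * Cconj (zm2 t))%C <= Ku.
Proof.
intros Ht. destruct (solution_z_explicit t Ht) as [_ [_ [_ [_ [Hzp2 [_ [_ [_ [Hzm2 _]]]]]]]]].
unfold Ku. eapply Rle_trans; [apply Cmod_triangle |].
rewrite !Cmod_cis_mult, Cmod_conj. lra.
Qed.

Lemma solution_g_osc_le t : 0 <= t <= tau -> Cmod (g_osc lambda p eps (zp t) (zm t) t) <= INR p * (2 * Kg).
Proof.
intros Ht. destruct (solution_z_explicit t Ht) as [_ [_ [Hzp [_ [_ [_ [Hzm _]]]]]]].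
apply Cmod_g_osc_le. intros k Hk. split; apply Hg_k; auto; lia.
Qed.

Lemma solution_r_bounds Lf :
  0 <= Lf ->
  (forall a b, Cmod a <= 2 * M + B -> Cmod b <= 2 * M + B ->
     Cmod (ffun lambda p a - ffun lambda p b) <= Lf * Cmod (a - b)) ->
  (KD + Ku + Lf * KP) ^ 2 * tau <= 1 -> exp ((2 * Lf + 1) * tau) <= 2 ->
  forall s, 0 <= s <= tau ->
    Cmod (r s) / eps ^ 2 <= sqrt Em + KP /\ Cmod (r1 s) <= sqrt Em + KP1 /\
    eps ^ 2 * Cmod (r2 s) <= (alpha + 1) * (sqrt Em + KP) + INR p * (2 * Kg) + Lf * (sqrt Em + KP) + Ku.
Proof.
intros HLf Hlip Htau_c Htau_L.
assert (HMu : 0 <= Mu) by (unfold Mu; lra).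
assert (He2 : 0 < eps ^ 2) by (apply pow_lt; lra).
destruct solution_mu_le as [Hmup Hmum].
destruct (Cmod_z0_le eps M yn ydn ltac:(lra) Hyn Hydn) as [Bp Bm]. fold zp0 zm0 in Bp, Bm.
assert (Hg0 : forall k, (1 <= k <= p)%nat ->
          Cmod (g_k lambda p k zp0 zm0) <= Kg /\ Cmod (g_k lambda p k zm0 zp0) <= Kg)
  by (intros k Hk; split; apply Hg_k; auto; lia).
destruct (oscillation_corrector lambda p alpha Mu Kg eps mup mum zp0 zm0 Halpha HMu HKg Heps Hmup Hmum Hg0)
  as [P [P1 [P2 [HPd [HPb HPe]]]]].
pose proof solution_z_explicit as HZ.
destruct Hsol as [Hsys [_ [_ [Hr0 Hr10]]]].
set (O := fun t => g_osc lambda p eps (zp t) (zm t) t).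
set (h := fun t => hfun lambda p eps (zp t) (zm t) (r t) t).
set (U := fun t => (cis (t / eps ^ 2) * zp2 t + cis (- (t / eps ^ 2)) * Cconj (zm2 t))%C).
assert (Hr_der : forall t, 0 <= t <= tau -> is_derive r t (r1 t) /\ is_derive r1 t (r2 t))
  by (intros t Ht; destruct (Hsys t Ht) as [_ [_ [_ [_ [_ [_ [D7 [D8 _]]]]]]]]; split; assumption).
assert (Hr_eq : forall t, 0 <= t <= tau ->
   (RtoC (eps ^ 2) * r2 t + RtoC (alpha + / eps ^ 2) * r t + (O t + h t) + RtoC (eps ^ 2) * U t = 0)%C)
  by (intros t Ht; destruct (Hsys t Ht) as [_ [_ [_ [_ [_ [_ [_ [_ [_ [_ Eq3]]]]]]]]]];
      rewrite g_r_split in Eq3; exact Eq3).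
assert (HPO : forall t, 0 <= t <= tau ->
   Cmod (P2 t + RtoC ((alpha + / eps ^ 2) / eps ^ 2) * P t + RtoC (/ eps ^ 2) * O t)%C <= KD).
{ intros t Ht. destruct (HZ t Ht) as [Ep [Em' _]]. unfold O. rewrite Ep, Em'. apply HPe. }
assert (Hh : forall t, 0 <= t <= tau -> Cmod (r t) <= B -> Cmod (h t) <= Lf * Cmod (r t)).
{ intros t Ht Hrt. destruct (HZ t Ht) as [_ [_ [Hzp [_ [_ [_ [Hzm _]]]]]]].
  assert (HB0 : 0 <= B) by (unfold B, KP; pose proof (sqrt_pos Em); pose proof (pos_INR p); nra).
  exact (Cmod_hfun_le lambda p eps (zp t) (zm t) (r t) t M B Lf Hlip Hzp Hzm HB0 Hrt). }
assert (Hr10' : Cmod (r1 0) <= R1) by (rewrite Hr10; exact (Cmod_rdot0_le _ _ _ _ _ _ _ _ Hmup Hmum Bp Bm)).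
assert (HB : sqrt Em + KP < B) by (unfold B; lra).
assert (Hest := remainder_estimates alpha eps tau KP KP1 KD Ku Lf B R1 r r1 r2 P P1 P2 O h U
  Halpha Heps ltac:(lra) HLf Hr_der (fun t _ => HPd t) Hr_eq (fun t _ => HPb t) HPO solution_zdd_le Hh
  Hr0 Hr10' HB Htau_c Htau_L _ solution_g_osc_le).
intros s Hs. destruct (Hest s Hs) as [E1 [E2 E3]].
split; [| split; assumption].
apply Rmult_le_reg_l with (eps ^ 2); [exact He2 |].
replace (eps ^ 2 * (Cmod (r s) / eps ^ 2)) with (Cmod (r s)) by (field; lra). exact E1.
Qed.

End Solution.

Lemma uniform_solution_bounds :
  exists tau2 K : R, 0 < tau2 /\ 0 < K /\
  forall (eps tau : R) (yn ydn : C) (zp zp1 zp2 zp3 zm zm1 zm2 zm3 r r1 r2 : R -> C),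
    0 < eps <= 1 -> 0 < tau <= tau2 -> Cmod yn <= M -> Cmod ydn <= M / eps ^ 2 ->
    is_solution alpha lambda p eps tau yn ydn zp zp1 zp2 zp3 zm zm1 zm2 zm3 r r1 r2 ->
    forall s, 0 <= s <= tau ->
      Cmod (zp s) <= K /\ Cmod (zp1 s) <= K /\ Cmod (zp2 s) <= K /\ Cmod (zp3 s) <= K /\
      Cmod (zm s) <= K /\ Cmod (zm1 s) <= K /\ Cmod (zm2 s) <= K /\ Cmod (zm3 s) <= K /\
      Cmod (r s) / eps ^ 2 <= K /\ Cmod (r1 s) <= K /\ eps ^ 2 * Cmod (r2 s) <= K.
Proof.
assert (HMu : 0 <= Mu) by (unfold Mu; lra).
assert (HKP : 0 <= KP) by (unfold KP; pose proof (pos_INR p); nra).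
assert (HKP1 : 0 <= KP1) by (unfold KP1; pose proof (pos_INR p); apply Rmult_le_pos; nra).
assert (HKu : 0 <= Ku) by (unfold Ku; pose proof (pow2_ge_0 Mu); nra).
pose proof (sqrt_pos Em).
destruct (ffun_locally_lipschitz lambda p (2 * M + B) ltac:(unfold B; lra)) as [Lf [HLf Hlip]].
set (c := KD + Ku + Lf * KP).
set (Kr := (alpha + 1) * (sqrt Em + KP) + INR p * (2 * Kg) + Lf * (sqrt Em + KP) + Ku).
assert (HKr : 0 <= Kr) by (unfold Kr; pose proof (pos_INR p); nra).
assert (HMuM : forall n, 0 <= Mu ^ n * M) by (intros n; apply Rmult_le_pos; [apply pow_le |]; lra).
exists (Rmin (/ (c ^ 2 + 1)) (ln 2 / (2 * Lf + 1))),
  (M + Mu * M + Mu ^ 2 * M + Mu ^ 3 * M + (sqrt Em + KP) + (sqrt Em + KP1) + Kr + 1).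
split; [apply Rmin_glb_lt; [apply Rinv_0_lt_compat; pose proof (pow2_ge_0 c); lra |];
  apply Rdiv_lt_0_compat; [rewrite <- ln_1; apply ln_increasing |]; lra |].
split; [pose proof (HMuM 1%nat); pose proof (HMuM 2%nat); pose proof (HMuM 3%nat); simpl in *; nra |].
intros eps tau yn ydn zp zp1 zp2 zp3 zm zm1 zm2 zm3 r r1 r2 Heps Htau Hyn Hydn Hsol s Hs.
destruct (short_time_le c Lf tau HLf Htau) as [Htau_c Htau_L].
destruct (solution_z_explicit eps tau yn ydn zp zp1 zp2 zp3 zm zm1 zm2 zm3 r r1 r2
  Heps ltac:(lra) Hyn Hydn Hsol s Hs) as [_ [_ Hz]].
destruct (solution_r_bounds eps tau yn ydn zp zp1 zp2 zp3 zm zm1 zm2 zm3 r r1 r2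
  Heps ltac:(lra) Hyn Hydn Hsol Lf HLf Hlip Htau_c Htau_L s Hs) as [Hr [Hr1 Hr2]].
fold Kr in Hr2.
pose proof (HMuM 1%nat). pose proof (HMuM 2%nat). pose proof (HMuM 3%nat). rewrite pow_1 in *.
repeat split; lra.
Qed.

End UniformBounds.

Theorem lemmaB4 (alpha lambda : R) (p : nat) (C0 : R) :
  0 <= alpha -> 0 <= C0 ->
  exists tau2 K : R, 0 < tau2 /\ 0 < K /\
  forall (eps tau : R) (yn ydn : C)
         (zp zp1 zp2 zp3 zm zm1 zm2 zm3 r r1 r2 : R -> C),
    0 < eps <= 1 -> 0 < tau <= tau2 ->
    Cmod yn <= C0 + 1 -> Cmod ydn <= (C0 + 1) / eps ^ 2 ->
    is_solution alpha lambda p eps tau yn ydn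
      zp zp1 zp2 zp3 zm zm1 zm2 zm3 r r1 r2 ->
    forall s, 0 <= s <= tau ->
      Cmod (zp s) <= K /\ Cmod (zp1 s) <= K /\ Cmod (zp2 s) <= K /\ Cmod (zp3 s) <= K /\
      Cmod (zm s) <= K /\ Cmod (zm1 s) <= K /\ Cmod (zm2 s) <= K /\ Cmod (zm3 s) <= K /\
      Cmod (r s) / eps ^ 2 <= K /\ Cmod (r1 s) <= K /\ eps ^ 2 * Cmod (r2 s) <= K.
Proof.
intros Halpha HC0.
destruct (g_plus_minus_bounded lambda p ((C0 + 1) * (C0 + 1)) ltac:(nra)) as [G [HG Hg_pm]].
destruct (g_k_bounded lambda p (C0 + 1) ltac:(lra)) as [Kg [HKg Hg_k]].
exact (uniform_solution_bounds alpha lambda p (C0 + 1) G Kg Halpha ltac:(lra) HG HKg Hg_pm Hg_k).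
Qed.
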